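(* Let $T$ be a binary tree rooted at $O$. Consider the stochastic search game on $T$ in which every edge has activation probability $p$. There exists $p_0\in(0,1)$ (depending on $T$) such that for all $p\in[p_0,1]$ the following hold. - For every leaf edge $e$, the expected time for the biased depth-first strategy $\sigma_\alpha$ to traverse $e$ is $\frac12\tau(O)+\Lambda(O)$. - Consequently, $\mathrm{val}(p)\le \frac12\tau(O)+\Lambda(O)$.
   Context: Setting: the stochastic search game on a finite tree $T$ rooted at $O$. Every edge has length $1$ and is active at each stage independently with the same probability $p\in(0,1]$. The hider picks an edge and stays there. The searcher, starting at $O$ and observing which edges are currently active, at each stage either waits or traverses an active edge incident to her position. The hider's payoff is the expected first time the searcher traverses his edge. $\mathrm{val}(p)$ is the value. Orient the edges away from $O$. For a vertex $v$, $T_v$ is the subtree rooted at $v$ consisting of all edges below $v$. For an edge $e=(u,w)$, $T_e$ is $\{e\}\cup T_w$, rooted at $u$. A leaf edge is an edge whose head has no outgoing edge. $T$ is binary if every vertex has at most two outgoing edges. A depth-first strategy (DFS) acts as follows at the searcher's current vertex: - if some untraversed outgoing edge is active, traverse one of them (possibly chosen at random); - if all untraversed outgoing edges are inactive, wait; - if all outgoing edges have been traversed, traverse the edge back toward $O$ if it is active, and wait otherwise. Cycle time: for a vertex or edge $z$, $\tau(z)$ is the expected time for a DFS on $T_z$, started at its root, to traverse every edge of $T_z$ and return to the root. It does not depend on the DFS. Equivalently, for binary trees: - $\tau(v)=0$ if $v$ has no outgoing edge; - $\tau(e)=\tau(w)+2/p$ for $e=(u,w)$; - $\tau(v)=\tau(e)$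 if $v$ has exactly one outgoing edge $e$; - $\tau(v)=\tau(w_1)+\tau(w_2)+3/p+1/(1-(1-p)^2)$ if $v$ has outgoing edges to $w_1,w_2$. The function $\Lambda$ is defined recursively on rooted binary trees. Write $\Lambda(v)=\Lambda(T_v)$ and $\Lambda(e)=\Lambda(T_e)$. - $\Lambda(v)=0$ if $v$ has no outgoing edge. - If the root $r$ has a single outgoing edge $e=(r,w)$, then $\Lambda(r)=\Lambda(e)=\Lambda(w)$. - If $r$ has two outgoing edges $e_1=(r,w_1)$ and $e_2=(r,w_2)$, then $$\Lambda(r)=\frac{\tau(e_1)}{\tau(e_1)+\tau(e_2)}\Lambda(w_1)+\frac{\tau(e_2)}{\tau(e_1)+\tau(e_2)}\Lambda(w_2)+\frac12\Big(\frac1{1-(1-p)^2}-\frac1p\Big).$$ The biased depth-first strategy $\sigma_\alpha$ is the DFS that, at a vertex whose two outgoing edges $e_1,e_2$ are both untraversed and both active, takes $e_1$ with probability $\alpha(e_1)$ and $e_2$ with probability $\alpha(e_2)=1-\alpha(e_1)$, where $$\alpha(e_1)=\mathrm{proj}_{[0,1]}\Big(\frac12+\frac{\Lambda(e_1)-\Lambda(e_2)}{\tau(e_1)+\tau(e_2)}\cdot\frac{1-(1-p)^2}{p^2}\Big).$$ *)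

From Stdlib Require Import Reals Lra List.
Import ListNotations.
Open Scope R_scope.

Inductive btree : Type :=
| Leaf : btree
| Unary : btree -> btree
| Binary : btree -> btree -> btree.

(** Vertices are encoded by their path from the root O, written in REVERSE order
    (most recent step first): the root is [], the i-th child of v is (i :: v)
    (i = 0 for the unique / first child, i = 1 for the second child).
    An edge (u,w) is identified by its head w (a nonempty path); its tail is [tl w]. *)
Definition vertex := list nat.

Fixpoint edges_from (t : btree) (v : vertex) : list vertex :=
  match t with
  | Leaf => []
  | Unary t1 => (0%nat :: v) :: edges_from t1 (0%nat :: v)
  | Binary l r => (0%nat :: v) :: (1%nat :: v) ::
                  edges_from l (0%nat :: v) ++ edges_from r (1%nat :: v)
  end.

Definition edges (T : btree) : list vertex := edges_from T [].

Definition is_leaf_edge (T : btree) (e : vertex) : Prop :=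
  In e (edges T) /\ forall i : nat, ~ In (i :: e) (edges T).

Fixpoint subtree_fwd (t : btree) (path : list nat) : option btree :=
  match path with
  | [] => Some t
  | i :: ps =>
      match t, i with
      | Unary t1, O => subtree_fwd t1 ps
      | Binary l _, O => subtree_fwd l ps
      | Binary _ r, S O => subtree_fwd r ps
      | _, _ => None
      end
  end.
Definition subtree (T : btree) (v : vertex) : option btree := subtree_fwd T (rev v).

Fixpoint tau (p : R) (t : btree) : R :=
  match t with
  | Leaf => 0
  | Unary t1 => tau p t1 + 2 / p
  | Binary l r => tau p l + tau p r + 3 / p + 1 / (1 - (1 - p) ^ 2)
  end.

Definition tau_edge (p : R) (tw : btree) : R := tau p tw + 2 / p.

Fixpoint Lambda (p : R) (t : btree) : R :=
  match t with
  | Leaf => 0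
  | Unary t1 => Lambda p t1
  | Binary l r =>
      tau_edge p l / (tau_edge p l + tau_edge p r) * Lambda p l
      + tau_edge p r / (tau_edge p l + tau_edge p r) * Lambda p r
      + / 2 * (1 / (1 - (1 - p) ^ 2) - 1 / p)
  end.

Definition veq (a b : vertex) : bool :=
  if list_eq_dec Nat.eq_dec a b then true else false.
Definition memb (x : vertex) (l : list vertex) : bool := existsb (veq x) l.

(** An activation configuration: the list of currently active edges. *)
Definition config := list vertex.

Fixpoint subsets {A : Type} (l : list A) : list (list A) :=
  match l with
  | [] => [[]]
  | x :: l' => let s := subsets l' in map (cons x) s ++ s
  end.

Definition configs (T : btree) : list config := subsets (edges T).

Definition cfg_prob (p : R) (T : btree) (c : config) : R :=
  fold_right (fun e acc => (if memb e c then p else 1 - p) * acc) 1 (edges T).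

(** Action of the searcher at a stage: [None] = wait, [Some w] = traverse the
    edge joining the current vertex to the adjacent vertex w. *)
Definition action := option vertex.

Definition legal (T : btree) (v : vertex) (c : config) (a : action) : Prop :=
  match a with
  | None => True
  | Some w =>
      (exists i : nat, w = i :: v /\ In w (edges T) /\ In w c)
      \/ (exists i : nat, v = i :: w /\ In v (edges T) /\ In v c)
  end.

(** A history: list of (observed configuration, chosen action), most recent first. *)
Definition history := list (config * action).

Fixpoint pos (h : history) : vertex :=
  match h with
  | [] => []
  | (_, None) :: h' => pos h'
  | (_, Some w) :: _ => w
  end.

Definition traverses (v : vertex) (a : action) (e : vertex) : bool :=
  match a with
  | None => false
  | Some w => (veq v (tl e) && veq w e) || (veq v e && veq w (tl e))
  end.

Fixpoint hits (e : vertex) (h : history) : bool :=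
  match h with
  | [] => false
  | (_, a) :: h' => traverses (pos h') a e || hits e h'
  end.

(** A (behavioural, randomized) searcher strategy: given the past history and the
    currently observed configuration, a finitely supported distribution over
    actions, given as a list of (probability, action) pairs. *)
Definition strategy := history -> config -> list (R * action).

Definition sumR (l : list R) : R := fold_right Rplus 0 l.

Definition valid_strategy (T : btree) (s : strategy) : Prop :=
  forall (h : history) (c : config),
    (forall q a, In (q, a) (s h c) -> 0 <= q /\ legal T (pos h) c a)
    /\ sumR (map fst (s h c)) = 1.

Fixpoint hist_dist (p : R) (T : btree) (s : strategy) (n : nat) : list (R * history) :=
  match n with
  | O => [(1, [])]
  | S n' =>
      flat_map (fun wh : R * history =>
        let (w, h) := wh in
        flat_map (fun c : config =>
          map (fun qa : R * action =>
                 let (q, a) := qa in (w * cfg_prob p T c * q, (c, a) :: h))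
              (s h c))
          (configs T))
        (hist_dist p T s n')
  end.

Definition surv (p : R) (T : btree) (s : strategy) (e : vertex) (n : nat) : R :=
  sumR (map (fun wh : R * history => if hits e (snd wh) then 0 else fst wh)
            (hist_dist p T s n)).

(** The expected time (first stage at which e is traversed) equals x:
    E[T_e] = sum_{n >= 0} P(T_e > n) = x (in particular it is finite). *)
Definition expected_time_is (p : R) (T : btree) (s : strategy) (e : vertex) (x : R) : Prop :=
  infinite_sum (surv p T s e) x.

(** Upper value of the game is at most c: for every eps > 0 the searcher has a
    strategy whose expected time to find every possible hider edge is <= c + eps.
    (The value val(p), when it exists, is bounded by the upper value.) *)
Definition upper_value_le (p : R) (T : btree) (c : R) : Prop :=
  forall eps : R, eps > 0 ->
    exists s : strategy, valid_strategy T s /\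
      forall e, In e (edges T) ->
        exists x, expected_time_is p T s e x /\ x <= c + eps.

Definition proj01 (x : R) : R := Rmax 0 (Rmin 1 x).

Definition alpha (p : R) (l r : btree) : R :=
  proj01 (/ 2 + (Lambda p l - Lambda p r) / (tau_edge p l + tau_edge p r)
                 * ((1 - (1 - p) ^ 2) / p ^ 2)).

Definition traversed (T : btree) (h : history) (e : vertex) : bool := hits e h.

Definition sigma_alpha (p : R) (T : btree) : strategy :=
  fun h c =>
    let v := pos h in
    let out := filter (fun w => memb w (edges T)) [0%nat :: v; 1%nat :: v] in
    let untr := filter (fun w => negb (traversed T h w)) out in
    let act := filter (fun w => memb w c) untr in
    match act with
    | [w] => [(1, Some w)]
    | [w1; w2] =>
        let a := match subtree T v with
                 | Some (Binary l r) => alpha p l r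
                 | _ => / 2
                 end in
        [(a, Some w1); (1 - a, Some w2)]
    | _ :: _ => [(1, None)] (* impossible: at most two outgoing edges *)
    | [] =>
        match untr with
        | _ :: _ => [(1, None)]
        | [] =>
            match v with
            | [] => [(1, None)]
            | _ :: u => if memb v c then [(1, Some u)] else [(1, None)]
            end
        end
    end.

From Pilot Require Import Defs.
From Stdlib Require Import Reals Lra Lia List FunctionalExtensionality.
Import ListNotations.
Open Scope bool_scope.
Open Scope R_scope.

(** Fix a target edge [e].  Along every history of [sigma_alpha] the searcher
    performs a depth-first search ([dfs_inv]), so its state is summarised by its
    position and the set of traversed edges, and the expected remaining time
    until [e] is traversed has an explicit form [hit_from]: finish the current
    subtree, climb back to the path toward [e], then go down toward [e],
    exploring each sibling subtree first with the probability dictated by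
    [alpha].  This quantity is bounded and satisfies the one-step equation
    ([bellman]); a potential argument ([expected_time_from_potential]) then
    shows that it is the expected hitting time, equal to [hit_fresh p T (rev e)]
    at the start.

    For [p] close to [1], [Lambda] is small, so [alpha] is never clipped
    ([unclipped_near_one]); then [alpha] exactly balances the two branches of
    every binary vertex ([balance_left], [balance_right]), whence [hit_fresh]
    equals [tau/2 + Lambda] at leaf edges and is at most that at every edge.
    The bound on the value uses a variant of [sigma_alpha] that waits at
    unreachable histories, which makes it a valid strategy. *)

Lemma veq_true a b : veq a b = true <-> a = b.
Proof. unfold veq; destruct list_eq_dec; split; congruence. Qed.

Lemma veq_false a b : veq a b = false <-> a <> b.
Proof. unfold veq; destruct list_eq_dec; split; congruence. Qed.

Lemma veq_refl a : veq a a = true.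
Proof. apply veq_true; reflexivity. Qed.

Lemma veq_neq a b : a <> b -> veq a b = false.
Proof. apply veq_false. Qed.

Lemma memb_In x l : memb x l = true <-> In x l.
Proof.
  unfold memb. rewrite existsb_exists. split.
  - intros [y [Hy H]]. apply veq_true in H; subst; exact Hy.
  - intros H; exists x; split; [exact H|apply veq_refl].
Qed.

Lemma memb_notIn x l : memb x l = false <-> ~ In x l.
Proof. rewrite <- memb_In. destruct (memb x l); split; congruence. Qed.

Lemma child_neq_parent (k : nat) (v : vertex) : k :: v <> v.
Proof. intros H. apply (f_equal (@length nat)) in H. simpl in H. lia. Qed.

Definition child (t : btree) (i : nat) : option btree :=
  match t, i with
  | Unary s, O => Some s
  | Binary l _, O => Some l
  | Binary _ r, S O => Some r
  | _, _ => None
  end.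

Lemma subtree_fwd_nil t : subtree_fwd t [] = Some t.
Proof. destruct t; reflexivity. Qed.

Lemma subtree_fwd_cons t i ps :
  subtree_fwd t (i :: ps) = match child t i with Some s => subtree_fwd s ps | None => None end.
Proof. destruct t; simpl; auto; destruct i as [|[|]]; auto. Qed.

Lemma subtree_fwd_app t l1 l2 :
  subtree_fwd t (l1 ++ l2) =
  match subtree_fwd t l1 with Some s => subtree_fwd s l2 | None => None end.
Proof.
  revert t; induction l1 as [|i l1 IH]; intros t; cbn [app].
  - rewrite subtree_fwd_nil; reflexivity.
  - rewrite !subtree_fwd_cons. destruct (child t i); auto.
Qed.

Lemma subtree_nil T : subtree T [] = Some T.
Proof. apply subtree_fwd_nil. Qed.

Lemma subtree_cons T i v :
  subtree T (i :: v) = match subtree T v with Some s => child s i | None => None end.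
Proof.
  unfold subtree. simpl. rewrite subtree_fwd_app.
  destruct (subtree_fwd T (rev v)) as [s|]; auto. rewrite subtree_fwd_cons.
  destruct (child s i); auto. apply subtree_fwd_nil.
Qed.

Lemma In_edges_from t v0 w :
  In w (edges_from t v0) <->
  exists i y s, w = i :: rev y ++ v0 /\ subtree_fwd t y = Some s /\ child s i <> None.
Proof.
  revert v0 w; induction t as [|t1 IH|l IHl r IHr]; intros v0 w; simpl.
  - split; [tauto|]. intros [i [y [s [_ [H1 H2]]]]].
    destruct y; simpl in H1; [|discriminate].
    inversion H1; subst. destruct i; simpl in H2; congruence.
  - split.
    + intros [H|H].
      * exists 0%nat, [], (Unary t1). repeat split; auto. discriminate.
      * apply IH in H. destruct H as [i [y [s [H1 [H2 H3]]]]].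
        exists i, (0%nat :: y), s. simpl. rewrite <- app_assoc. auto.
    + intros [i [y [s [H1 [H2 H3]]]]]. destruct y as [|j y].
      * simpl in H2. inversion H2; subst. left. destruct i; simpl in *; congruence.
      * simpl in H2. destruct j; [|discriminate]. right. apply IH.
        exists i, y, s. simpl in H1. rewrite <- app_assoc in H1. auto.
  - split.
    + intros [H|[H|H]].
      * exists 0%nat, [], (Binary l r). repeat split; auto. discriminate.
      * exists 1%nat, [], (Binary l r). repeat split; auto. discriminate.
      * apply in_app_or in H. destruct H as [H|H]; [apply IHl in H|apply IHr in H];
          destruct H as [i [y [s [H1 [H2 H3]]]]].
        -- exists i, (0%nat :: y), s. simpl. rewrite <- app_assoc. auto.
        -- exists i, (1%nat :: y), s. simpl. rewrite <- app_assoc. auto.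
    + intros [i [y [s [H1 [H2 H3]]]]]. destruct y as [|j y].
      * simpl in H2. inversion H2; subst. destruct i as [|[|i]]; simpl in *; auto. congruence.
      * right; right. apply in_or_app. simpl in H1. rewrite <- app_assoc in H1. simpl in H1.
        destruct j as [|[|j]]; simpl in H2; [left; apply IHl|right; apply IHr|discriminate];
          exists i, y, s; auto.
Qed.

Lemma In_edges_cons T i v :
  In (i :: v) (edges T) <-> exists s, subtree T v = Some s /\ child s i <> None.
Proof.
  unfold edges, subtree. rewrite In_edges_from. split.
  - intros [i' [y [s [H1 H2]]]]. rewrite app_nil_r in H1. inversion H1; subst.
    rewrite rev_involutive. eauto.
  - intros [s H]. exists i, (rev v), s. rewrite rev_involutive, app_nil_r. auto.
Qed.

Lemma In_child T v t k :
  subtree T v = Some t -> (In (k :: v) (edges T) <-> child t k <> None).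
Proof.
  intros H. rewrite In_edges_cons. split.
  - intros [s [H1 H2]]. rewrite H in H1. inversion H1; subst; auto.
  - intros H2. exists t; auto.
Qed.

Lemma memb_edges_child T v t k : subtree T v = Some t ->
  memb (k :: v) (edges T) = match child t k with Some _ => true | None => false end.
Proof.
  intros H. destruct (memb (k :: v) (edges T)) eqn:E.
  - apply memb_In, (In_child T v t k H) in E. destruct (child t k); congruence.
  - apply memb_notIn in E. rewrite (In_child T v t k H) in E.
    destruct (child t k); [exfalso; apply E|]; congruence.
Qed.

Lemma nil_notin_edges T : ~ In [] (edges T).
Proof.
  intros H. unfold edges in H. apply In_edges_from in H.
  destruct H as [i [y [s [H _]]]]. discriminate.
Qed.

Lemma subtree_edge T w : In w (edges T) -> exists s, subtree T w = Some s.
Proof.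
  intros H. destruct w as [|i v]; [exfalso; eapply nil_notin_edges; eauto|].
  apply In_edges_cons in H. destruct H as [s [H1 H2]].
  rewrite subtree_cons, H1. destruct (child s i); eauto. congruence.
Qed.

Lemma vertex_edge T j w s : subtree T (j :: w) = Some s -> In (j :: w) (edges T).
Proof.
  intros H. rewrite subtree_cons in H. apply In_edges_cons.
  destruct (subtree T w) as [s0|]; [|discriminate]. exists s0; split; auto. congruence.
Qed.

Lemma edges_from_suffix t v0 w : In w (edges_from t v0) -> exists x, w = x ++ v0 /\ x <> [].
Proof.
  intros H. apply In_edges_from in H. destruct H as [i [y [s [H _]]]].
  exists (i :: rev y). split; [auto|discriminate].
Qed.

Lemma app_cons_neq (x1 x2 v : list nat) a b : a <> b -> x1 ++ a :: v <> x2 ++ b :: v.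
Proof.
  intros Hab H. assert (Hl : length x1 = length x2).
  { apply (f_equal (@length nat)) in H. rewrite !length_app in H. simpl in H. lia. }
  revert x2 H Hl; induction x1 as [|c x1 IH]; intros [|d x2] H Hl; simpl in *; try lia.
  - inversion H; auto.
  - inversion H; subst. eapply IH; eauto.
Qed.

(** Every edge is listed once, so [edges T] is a valid index set for independent
    activations. *)
Lemma NoDup_edges T : NoDup (edges T).
Proof.
  unfold edges. generalize (@nil nat) as v0.
  induction T as [|t1 IH|l IHl r IHr]; intros v0; simpl.
  - constructor.
  - constructor; auto. intros H. apply edges_from_suffix in H.
    destruct H as [x [H1 H2]]. apply (f_equal (@length nat)) in H1.
    rewrite length_app in H1. simpl in H1. destruct x; simpl in *; [congruence|lia].
  - assert (Hlen : forall t w v, In w (edges_from t v) -> (length w > length v)%nat).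
    { intros t w v H. apply edges_from_suffix in H. destruct H as [x [-> Hx]].
      rewrite length_app. destruct x; simpl; [congruence|lia]. }
    constructor; [|constructor].
    + intros [H|H]; [discriminate|]. apply in_app_or in H.
      destruct H as [H|H]; apply Hlen in H; simpl in H; lia.
    + intros H. apply in_app_or in H. destruct H as [H|H]; apply Hlen in H; simpl in H; lia.
    + apply NoDup_app; auto. intros a Ha Hb.
      apply edges_from_suffix in Ha. apply edges_from_suffix in Hb.
      destruct Ha as [x1 [H1 _]]. destruct Hb as [x2 [H2 _]]. subst.
      eapply (app_cons_neq x1 x2 v0 0%nat 1%nat); auto.
Qed.

(** * The ancestor order
    With reversed paths, [a] is an ancestor of [b] (or [b] itself) iff [a] is a
    suffix of [b]. *)

Definition ancestor (a b : vertex) : Prop := exists x, b = x ++ a.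

Fixpoint suffixes (w : vertex) : list vertex :=
  match w with [] => [[]] | _ :: w' => w :: suffixes w' end.

Definition ancestorb (a b : vertex) : bool := existsb (veq a) (suffixes b).

Lemma ancestor_cons a k b : ancestor a (k :: b) <-> a = k :: b \/ ancestor a b.
Proof.
  split.
  - intros [[|y x] H]; simpl in H; [left; auto|right]. inversion H; subst. exists x; auto.
  - intros [->|[x ->]]; [exists []|exists (k :: x)]; auto.
Qed.

Lemma ancestor_nil a : ancestor a [] <-> a = [].
Proof.
  split; [|intros ->; exists []; auto].
  intros [x H]. destruct x, a; simpl in H; auto; discriminate.
Qed.

Lemma ancestorb_spec a b : ancestorb a b = true <-> ancestor a b.
Proof.
  unfold ancestorb. induction b as [|k b IH]; simpl.
  - rewrite ancestor_nil, Bool.orb_false_r. apply veq_true.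
  - rewrite Bool.orb_true_iff, ancestor_cons, IH, veq_true. tauto.
Qed.

Lemma ancestorb_false a b : ancestorb a b = false <-> ~ ancestor a b.
Proof. rewrite <- ancestorb_spec. destruct (ancestorb a b); split; congruence. Qed.

Lemma ancestor_refl a : ancestor a a.
Proof. exists []; auto. Qed.

Lemma ancestor_trans a b c : ancestor a b -> ancestor b c -> ancestor a c.
Proof. intros [x ->] [y ->]. exists (y ++ x). rewrite app_assoc; auto. Qed.

Lemma ancestor_parent k b : ancestor b (k :: b).
Proof. exists [k]; auto. Qed.

Lemma ancestor_root b : ancestor [] b.
Proof. exists b; rewrite app_nil_r; auto. Qed.

Lemma ancestor_length a b : ancestor a b -> (length a <= length b)%nat.
Proof. intros [x ->]. rewrite length_app; lia. Qed.

Lemma not_ancestor_child k b : ~ ancestor (k :: b) b.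
Proof. intros H. apply ancestor_length in H. simpl in H. lia. Qed.

Lemma ancestor_child_tl j v e : ancestor (j :: v) e -> ancestor v (tl e).
Proof.
  intros [[|y x] ->]; simpl; [apply ancestor_refl|].
  eapply ancestor_trans; [apply ancestor_parent|]. exists x; auto.
Qed.

Lemma ancestor_same_depth a b c :
  ancestor a c -> ancestor b c -> length a = length b -> a = b.
Proof.
  intros [x ->] [y Hy] Hab. assert (H : length x = length y).
  { apply (f_equal (@length nat)) in Hy. rewrite !length_app in Hy. lia. }
  clear Hab. revert y Hy H; induction x as [|k x IH]; intros [|k' y] Hy Hl;
    simpl in *; try lia; auto.
  inversion Hy; subst. eapply IH; eauto.
Qed.

Lemma subtree_ancestor T f g s :
  subtree T g = Some s -> ancestor f g -> exists s', subtree T f = Some s'.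
Proof.
  intros H [x ->]. unfold subtree in *. rewrite rev_app_distr, subtree_fwd_app in H.
  destruct (subtree_fwd T (rev f)); eauto.
Qed.

Lemma edge_ancestor T f g : In g (edges T) -> ancestor f g -> f <> [] -> In f (edges T).
Proof.
  intros Hg Hs Hf. destruct (subtree_edge T g Hg) as [s Hs'].
  destruct (subtree_ancestor T f g s Hs' Hs) as [s' H].
  destruct f; [congruence|]. eapply vertex_edge; eauto.
Qed.

(** If [a] is an ancestor of the tail of [e], then [e] lies in the branch [j :: a]
    of [a], and [rest] is the remaining (forward) path from [j :: a] to [e]. *)
Lemma branch_toward a e : ancestor a (tl e) -> e <> [] ->
  exists j rest, skipn (length a) (rev e) = j :: rest /\ ancestor (j :: a) e /\
    skipn (length (j :: a)) (rev e) = rest /\ (rest = [] <-> j :: a = e).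
Proof.
  intros [x Hx] He. destruct e as [|i e']; [congruence|]. simpl in Hx. subst e'.
  assert (Hs : forall n, skipn (length a + n) (rev (i :: x ++ a)) = skipn n (rev (i :: x))).
  { intros n. replace (i :: x ++ a) with ((i :: x) ++ a) by auto. rewrite rev_app_distr.
    rewrite skipn_app, length_rev. replace (length a + n - length a)%nat with n by lia.
    rewrite skipn_all2 by (rewrite length_rev; lia). auto. }
  destruct (rev (i :: x)) as [|j rest] eqn:Er.
  { apply (f_equal (@length nat)) in Er. rewrite length_rev in Er. simpl in Er. lia. }
  assert (Hix : i :: x = rev rest ++ [j]) by (rewrite <- (rev_involutive (i :: x)), Er; auto).
  exists j, rest. split; [|split; [|split]].
  - rewrite <- (Nat.add_0_r (length a)), Hs. auto.
  - exists (rev rest). rewrite app_comm_cons, Hix, <- app_assoc. auto.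
  - simpl length. rewrite <- Nat.add_1_r, Hs. auto.
  - split.
    + intros ->. simpl in Hix. inversion Hix; subst. auto.
    + intros H. inversion H. apply (f_equal (@length nat)) in H2.
      rewrite length_app in H2. simpl in H2.
      apply (f_equal (@length nat)) in Er. rewrite length_rev in Er. simpl in Er.
      destruct rest; auto. simpl in Er. lia.
Qed.

Lemma sumR_app l1 l2 : sumR (l1 ++ l2) = sumR l1 + sumR l2.
Proof. induction l1; simpl; [lra|]. rewrite IHl1; lra. Qed.

Lemma sumR_map_scal {A} (f : A -> R) k l :
  sumR (map (fun x => k * f x) l) = k * sumR (map f l).
Proof. induction l; simpl; [lra|]. rewrite IHl; lra. Qed.

Lemma sumR_map_ext {A} (f g : A -> R) l :
  (forall x, In x l -> f x = g x) -> sumR (map f l) = sumR (map g l).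
Proof. intros H. f_equal. apply map_ext_in. auto. Qed.

Lemma sumR_map_minus {A} (f g : A -> R) l :
  sumR (map (fun x => f x - g x) l) = sumR (map f l) - sumR (map g l).
Proof. induction l; simpl; [lra|]. rewrite IHl; lra. Qed.

Lemma sumR_map_zero {A} (f : A -> R) l :
  (forall x, In x l -> f x = 0) -> sumR (map f l) = 0.
Proof. induction l; simpl; intros H; auto. rewrite H, IHl; auto. lra. Qed.

Lemma sumR_flat_map {A B} (f : B -> R) (g : A -> list B) l :
  sumR (map f (flat_map g l)) = sumR (map (fun x => sumR (map f (g x))) l).
Proof. induction l; simpl; auto. rewrite map_app, sumR_app, IHl. auto. Qed.

Lemma sumR_map_le {A} (f g : A -> R) l :
  (forall x, In x l -> f x <= g x) -> sumR (map f l) <= sumR (map g l).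
Proof.
  induction l; simpl; intros H; [lra|].
  assert (f a <= g a) by auto. assert (sumR (map f l) <= sumR (map g l)) by auto. lra.
Qed.

Lemma sumR_nonneg {A} (f : A -> R) l :
  (forall x, In x l -> 0 <= f x) -> 0 <= sumR (map f l).
Proof.
  intros H. rewrite <- (sumR_map_zero (fun _ => 0) l) by auto. apply sumR_map_le. auto.
Qed.

(** * Expectations over random activation configurations
    [ExE p E G] is the expectation of [G m] when each edge of the list [E] is
    active independently with probability [p] ([m] is the activity indicator). *)

Lemma subsets_incl {A} (E : list A) c : In c (subsets E) -> incl c E.
Proof.
  revert c; induction E as [|x E IH]; simpl; intros c H.
  - destruct H as [<-|[]]. intros z [].
  - apply in_app_or in H. destruct H as [H|H].
    + apply in_map_iff in H. destruct H as [c' [<- H]]. apply IH in H.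
      intros z [<-|Hz]; [left|right]; auto.
    + apply IH in H. intros z Hz; right; auto.
Qed.

Section Expectation.
Variable p : R.

Definition cfgE (E : list vertex) (c : config) : R :=
  fold_right (fun e acc => (if memb e c then p else 1 - p) * acc) 1 E.

Definition ExE (E : list vertex) (G : (vertex -> bool) -> R) : R :=
  sumR (map (fun c => cfgE E c * G (fun z => memb z c)) (subsets E)).

Lemma cfgE_ext E c1 c2 :
  (forall e, In e E -> memb e c1 = memb e c2) -> cfgE E c1 = cfgE E c2.
Proof. induction E as [|x E IH]; simpl; intros H; auto. rewrite H, IH; auto. Qed.

Lemma cfgE_nonneg E c : 0 <= p <= 1 -> 0 <= cfgE E c.
Proof.
  intros Hp. induction E; simpl; [lra|]. apply Rmult_le_pos; auto.
  destruct (memb a c); lra.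
Qed.

Lemma ExE_cons x E G : ~ In x E ->
  ExE (x :: E) G = p * ExE E (fun m => G (fun z => veq z x || m z)) + (1 - p) * ExE E G.
Proof.
  intros Hx. unfold ExE. simpl subsets. rewrite map_app, sumR_app, map_map.
  rewrite <- !sumR_map_scal. f_equal.
  - apply sumR_map_ext. intros c Hc. apply subsets_incl in Hc.
    cbn [cfgE fold_right]. fold (cfgE E (x :: c)). unfold memb at 1. simpl.
    rewrite veq_refl. simpl.
    rewrite (cfgE_ext E (x :: c) c); [lra|].
    intros e He. unfold memb. simpl. rewrite veq_neq; auto. intros ->; auto.
  - apply sumR_map_ext. intros c Hc. apply subsets_incl in Hc. simpl.
    replace (memb x c) with false; [lra|]. symmetry. apply memb_notIn. auto.
Qed.

Lemma ExE_ext E G1 G2 :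
  (forall m, (forall z, m z = true -> In z E) -> G1 m = G2 m) -> ExE E G1 = ExE E G2.
Proof.
  intros H. unfold ExE. apply sumR_map_ext. intros c Hc. f_equal. apply H.
  intros z Hz. apply memb_In in Hz. apply (subsets_incl E c); auto.
Qed.

Lemma ExE_const E G k : NoDup E -> (forall m, G m = k) -> ExE E G = k.
Proof.
  revert G; induction E as [|x E IH]; intros G HN HG.
  - unfold ExE. simpl. rewrite HG. lra.
  - inversion HN; subst. rewrite ExE_cons by auto. rewrite !IH; auto. lra.
Qed.

Definition upd (m : vertex -> bool) (x : vertex) (b : bool) : vertex -> bool :=
  fun z => if veq z x then b else m z.

Lemma ExE_split x E G : NoDup E -> In x E ->
  ExE E G = p * ExE E (fun m => G (upd m x true)) + (1 - p) * ExE E (fun m => G (upd m x false)).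
Proof.
  revert G; induction E as [|y E IH]; intros G HN Hx; [destruct Hx|].
  inversion HN; subst. rewrite !ExE_cons by auto.
  destruct (list_eq_dec Nat.eq_dec y x) as [<-|Hyx].
  - assert (E1 : forall b, (fun m => G (upd (fun z => veq z y || m z) y b)) = (fun m => G (upd m y b))).
    { intros b. apply functional_extensionality. intros m. f_equal.
      apply functional_extensionality. intros z. unfold upd. destruct (veq z y); auto. }
    rewrite !E1.
    assert (E3 : ExE E (fun m => G (upd m y false)) = ExE E G).
    { apply ExE_ext. intros m Hm. f_equal. apply functional_extensionality. intros z. unfold upd.
      destruct (veq z y) eqn:Ez; auto. apply veq_true in Ez; subst.
      destruct (m y) eqn:Em; auto. }
    rewrite E3. change (ExE E (fun m => G (upd m y true)))
      with (ExE E (fun m => G (fun z => veq z y || m z))). lra.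
  - destruct Hx as [Hx|Hx]; [congruence|].
    rewrite (IH (fun m => G (fun z => veq z y || m z))), (IH G) by auto.
    assert (E1 : forall b, (fun m => G (upd (fun z => veq z y || m z) x b)) =
                           (fun m => G (fun z => veq z y || upd m x b z))).
    { intros b. apply functional_extensionality. intros m. f_equal.
      apply functional_extensionality. intros z. unfold upd. destruct (veq z x) eqn:Ez; auto.
      apply veq_true in Ez; subst. rewrite veq_neq; auto. }
    rewrite !E1. lra.
Qed.

Lemma ExE_one x E F : NoDup E -> In x E ->
  ExE E (fun m => F (m x)) = p * F true + (1 - p) * F false.
Proof.
  intros HN Hx. rewrite (ExE_split x) by auto.
  rewrite (ExE_const E _ (F true)), (ExE_const E _ (F false)); auto;
    intros m; unfold upd; rewrite veq_refl; auto.
Qed.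

Lemma ExE_two x y E F : NoDup E -> In x E -> In y E -> x <> y ->
  ExE E (fun m => F (m x) (m y)) =
  p * p * F true true + p * (1 - p) * F true false
  + (1 - p) * p * F false true + (1 - p) * (1 - p) * F false false.
Proof.
  intros HN Hx Hy Hxy.
  assert (A : forall b, ExE E (fun m => F (upd m x b x) (upd m x b y))
                        = p * F b true + (1 - p) * F b false).
  { intros b. rewrite (ExE_split y) by auto.
    rewrite (ExE_const E _ (F b true)), (ExE_const E _ (F b false)); auto; intros m; unfold upd;
      rewrite veq_refl, (veq_neq y x), veq_refl; auto. }
  rewrite (ExE_split x) by auto. cbv beta. rewrite !A. lra.
Qed.

End Expectation.

(** * Expected hitting times from a potential
    If a decreasing nonnegative potential [Phi] loses exactly [u n] at step [n]
    and never exceeds [M * u n], it decays geometrically, and the series of the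
    [u n] sums to [Phi 0]. *)

Lemma series_of_potential (u Phi : nat -> R) (M : R) :
  1 <= M -> (forall n, Phi (S n) = Phi n - u n) -> (forall n, 0 <= Phi n <= M * u n) ->
  infinite_sum u (Phi O).
Proof.
  intros HM Hstep Hb.
  set (q := 1 - / M).
  assert (Hq : 0 <= q < 1).
  { unfold q. assert (0 < / M <= 1) by (split; [apply Rinv_0_lt_compat; lra|
      rewrite <- Rinv_1; apply Rinv_le_contravar; lra]). lra. }
  assert (Hdecay : forall n, Phi n <= q ^ n * Phi O).
  { induction n as [|n IH]; simpl; [lra|].
    assert (Hu : / M * Phi n <= u n).
    { destruct (Hb n) as [_ H].
      replace (u n) with (/ M * (M * u n)) by (field; lra).
      apply Rmult_le_compat_l; [left; apply Rinv_0_lt_compat; lra|lra]. }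
    rewrite Hstep. assert (Phi n - u n <= q * Phi n) by (unfold q; lra).
    assert (q * Phi n <= q * (q ^ n * Phi O)) by (apply Rmult_le_compat_l; lra). lra. }
  assert (Hpartial : forall n, sum_f_R0 u n = Phi O - Phi (S n)).
  { induction n as [|n IH]; simpl; [rewrite Hstep; lra|].
    rewrite IH, (Hstep (S n)). lra. }
  intros eps Heps.
  assert (H0 : 0 <= Phi O) by apply Hb.
  destruct (pow_lt_1_zero q ltac:(rewrite Rabs_pos_eq; lra) (eps / (Phi O + 1)))
    as [N HN]; [apply Rdiv_lt_0_compat; lra|].
  exists N. intros n Hn. unfold Rdist. rewrite Hpartial.
  specialize (HN (S n) ltac:(lia)). rewrite Rabs_pos_eq in HN by (apply pow_le; lra).
  assert (Hsmall : q ^ S n * Phi O <= eps / (Phi O + 1) * Phi O) by (apply Rmult_le_compat_r; lra).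
  assert (eps / (Phi O + 1) * Phi O < eps).
  { replace (eps / (Phi O + 1) * Phi O) with (eps - eps / (Phi O + 1)) by (field; lra).
    assert (0 < eps / (Phi O + 1)) by (apply Rdiv_lt_0_compat; lra). lra. }
  destruct (Hb (S n)) as [HP _]. pose proof (Hdecay (S n)).
  replace (Phi O - Phi (S n) - Phi O) with (- Phi (S n)) by ring.
  rewrite Rabs_Ropp, Rabs_pos_eq; lra.
Qed.

Definition step_mean (p : R) (T : btree) (s : strategy) (h : history)
  (F : history -> R) : R :=
  sumR (map (fun c => cfg_prob p T c *
    sumR (map (fun qa => fst qa * F ((c, snd qa) :: h)) (s h c))) (configs T)).

Definition alive (e : vertex) (V : history -> R) (h : history) : R :=
  if hits e h then 0 else V h.

Section HittingTime.
Variables (p : R) (T : btree) (s : strategy) (e : vertex) (V : history -> R)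
  (Inv : history -> Prop) (M : R).
Hypothesis Hp : 0 <= p <= 1.
Hypothesis Hinv_nil : Inv [].
Hypothesis Hinv_step : forall h c q a, Inv h -> In (q, a) (s h c) -> Inv ((c, a) :: h).
Hypothesis Hweights : forall h c q a, Inv h -> In (q, a) (s h c) -> 0 <= q.
Hypothesis Hbounded : forall h, Inv h -> 0 <= V h <= M.
Hypothesis Hbellman : forall h, Inv h -> hits e h = false ->
  V h = 1 + step_mean p T s h (alive e V).

Lemma hist_dist_inv n wh : In wh (hist_dist p T s n) -> Inv (snd wh) /\ 0 <= fst wh.
Proof.
  revert wh; induction n as [|n IH]; intros wh H.
  - simpl in H. destruct H as [<-|[]]. simpl. split; auto; lra.
  - simpl in H. apply in_flat_map in H. destruct H as [[w h] [H1 H2]].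
    apply IH in H1. simpl in H1. destruct H1 as [I1 W1].
    apply in_flat_map in H2. destruct H2 as [c [Hc H2]].
    apply in_map_iff in H2. destruct H2 as [[q a] [<- H3]]. simpl. split.
    + eapply Hinv_step; eauto.
    + apply Rmult_le_pos; [apply Rmult_le_pos; auto; apply cfgE_nonneg; auto|].
      eapply Hweights; eauto.
Qed.

Definition potential (n : nat) : R :=
  sumR (map (fun wh : R * history => fst wh * alive e V (snd wh)) (hist_dist p T s n)).

Lemma potential_step n : potential (S n) = potential n - surv p T s e n.
Proof.
  unfold potential, surv. rewrite <- sumR_map_minus. simpl hist_dist.
  rewrite sumR_flat_map. apply sumR_map_ext. intros [w h] Hwh.
  apply hist_dist_inv in Hwh. destruct Hwh as [I W]. simpl snd; simpl fst.
  rewrite sumR_flat_map. unfold alive at 2. destruct (hits e h) eqn:Eh.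
  - rewrite sumR_map_zero; [lra|]. intros c _. rewrite map_map.
    apply sumR_map_zero. intros [q a] _. simpl. unfold alive. simpl.
    rewrite Eh, Bool.orb_true_r. ring.
  - rewrite (Hbellman h) by auto. unfold step_mean.
    rewrite Rmult_plus_distr_l, Rmult_1_r, <- sumR_map_scal.
    replace (w + _ - w) with (sumR (map (fun c => w * (cfg_prob p T c *
      sumR (map (fun qa => fst qa * alive e V ((c, snd qa) :: h)) (s h c)))) (configs T)))
      by ring.
    apply sumR_map_ext. intros c Hc. rewrite map_map, <- !sumR_map_scal.
    apply sumR_map_ext. intros [q a] _. simpl. ring.
Qed.

Lemma potential_bounds n : 0 <= potential n <= Rmax 1 M * surv p T s e n.
Proof.
  unfold potential, surv. rewrite <- sumR_map_scal. split.
  - apply sumR_nonneg. intros wh Hwh. apply hist_dist_inv in Hwh. unfold alive.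
    destruct (hits e (snd wh)); [lra|]. apply Rmult_le_pos; [tauto|]. apply Hbounded; tauto.
  - apply sumR_map_le. intros wh Hwh. apply hist_dist_inv in Hwh. unfold alive.
    destruct (hits e (snd wh)); [lra|]. destruct Hwh as [I W].
    specialize (Hbounded _ I). pose proof (Rmax_r 1 M). nra.
Qed.

Theorem expected_time_from_potential : expected_time_is p T s e (V []).
Proof.
  assert (H0 : potential O = V []).
  { unfold potential, alive. simpl. lra. }
  rewrite <- H0. apply (series_of_potential _ _ (Rmax 1 M)).
  - apply Rmax_l.
  - apply potential_step.
  - apply potential_bounds.
Qed.

End HittingTime.

Lemma traverses_down v k f : traverses v (Some (k :: v)) f = veq f (k :: v).
Proof.
  unfold traverses. destruct (veq f (k :: v)) eqn:E.
  - apply veq_true in E; subst. cbn [tl]. rewrite !veq_refl. reflexivity.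
  - apply Bool.orb_false_iff. apply veq_false in E. split.
    + apply Bool.andb_false_iff. right. apply veq_neq. auto.
    + apply Bool.andb_false_iff. destruct (veq v f) eqn:E2; [|auto]. right.
      apply veq_true in E2; subst. apply veq_neq. intros H.
      apply (f_equal (@length nat)) in H. destruct f; simpl in H; lia.
Qed.

Lemma traverses_up i u f : traverses (i :: u) (Some u) f = veq f (i :: u).
Proof.
  unfold traverses. destruct (veq f (i :: u)) eqn:E.
  - apply veq_true in E; subst. cbn [tl]. rewrite !veq_refl, Bool.orb_true_r. reflexivity.
  - apply Bool.orb_false_iff. apply veq_false in E. split.
    + apply Bool.andb_false_iff. destruct (veq (i :: u) (tl f)) eqn:E2; [|auto]. right.
      apply veq_true in E2. apply veq_neq. intros <-.
      destruct u; simpl in E2; [discriminate|].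
      apply (f_equal (@length nat)) in E2. simpl in E2; lia.
    + apply Bool.andb_false_iff. left. apply veq_neq. auto.
Qed.

Definition visited (h : history) : vertex -> bool := fun f => hits f h.

Lemma visited_wait h c : visited ((c, None) :: h) = visited h.
Proof. reflexivity. Qed.

Lemma visited_down h c k :
  visited ((c, Some (k :: Defs.pos h)) :: h) = fun f => veq f (k :: Defs.pos h) || visited h f.
Proof.
  apply functional_extensionality. intros f. unfold visited. cbn [hits].
  rewrite traverses_down. reflexivity.
Qed.

Lemma visited_up h c i u : Defs.pos h = i :: u -> visited h (i :: u) = true ->
  visited ((c, Some u) :: h) = visited h.
Proof.
  intros Hv HD. apply functional_extensionality. intros f. unfold visited. cbn [hits].
  rewrite Hv, traverses_up. destruct (veq f (i :: u)) eqn:E; auto.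
  apply veq_true in E; subst; auto.
Qed.

(** * Normal form of the biased depth-first strategy
    At a vertex [v] with subtree [t], the move of [sigma_alpha] only depends on
    which outgoing edges of [v] are already traversed ([D]) and active ([c]). *)

Section NormalForm.
Variables (p : R) (T : btree).

Definition act_up (v : vertex) (c : config) : list (R * action) :=
  match v with
  | [] => [(1, None)]
  | _ :: u => if memb v c then [(1, Some u)] else [(1, None)]
  end.

Definition act_one (w : vertex) (c : config) : list (R * action) :=
  if memb w c then [(1, Some w)] else [(1, None)].

Definition act_two (l r : btree) (v : vertex) (c : config) : list (R * action) :=
  if memb (0%nat :: v) c then
    (if memb (1%nat :: v) c
     then [(alpha p l r, Some (0%nat :: v)); (1 - alpha p l r, Some (1%nat :: v))]
     else [(1, Some (0%nat :: v))])
  else (if memb (1%nat :: v) c then [(1, Some (1%nat :: v))] else [(1, None)]).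

Definition dfs_step (t : btree) (v : vertex) (D : vertex -> bool)
  : config -> list (R * action) :=
  match t with
  | Leaf => act_up v
  | Unary s => if D (0%nat :: v) then act_up v else act_one (0%nat :: v)
  | Binary l r =>
      if D (0%nat :: v) then (if D (1%nat :: v) then act_up v else act_one (1%nat :: v))
      else (if D (1%nat :: v) then act_one (0%nat :: v) else act_two l r v)
  end.

Lemma sigma_alpha_dfs_step h c t : subtree T (Defs.pos h) = Some t ->
  sigma_alpha p T h c = dfs_step t (Defs.pos h) (visited h) c.
Proof.
  intros Ht. unfold sigma_alpha, traversed, visited. set (v := Defs.pos h) in *.
  cbn [filter]. rewrite !(memb_edges_child T v t) by auto. rewrite Ht.
  destruct t as [|s|l r]; simpl.
  - unfold act_up. destruct v; auto.
  - destruct (hits (0%nat :: v) h); simpl.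
    + unfold act_up; destruct v; auto.
    + unfold act_one. destruct (memb (0%nat :: v) c); auto.
  - unfold act_one, act_two, act_up.
    destruct (hits (0%nat :: v) h), (hits (1%nat :: v) h); simpl;
      destruct (memb (0%nat :: v) c), (memb (1%nat :: v) c); simpl; auto; destruct v; auto.
Qed.

End NormalForm.

Record dfs_inv (T : btree) (v : vertex) (D : vertex -> bool) : Prop := {
  inv_vertex : exists t, subtree T v = Some t;
  inv_path : forall f, In f (edges T) -> ancestor f v -> D f = true;
  inv_finished : forall f g, D f = true -> ~ ancestor f v -> In g (edges T) ->
    ancestor f g -> D g = true;
  inv_upward : forall f g, D g = true -> In f (edges T) -> ancestor f g -> D f = true }.

Definition Inv (T : btree) (h : history) : Prop := dfs_inv T (Defs.pos h) (visited h).

Lemma dfs_inv_fresh T v D w k : dfs_inv T v D -> In w (edges T) -> D w = false ->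
  D (k :: w) = false.
Proof.
  intros I Hw Hdw. destruct (D (k :: w)) eqn:E; auto. rewrite <- Hdw.
  symmetry. apply (inv_upward _ _ _ I w (k :: w)); auto. apply ancestor_parent.
Qed.

Lemma Inv_nil T : Inv T [].
Proof.
  constructor; unfold visited; simpl; try discriminate.
  - exists T; apply subtree_nil.
  - intros f Hf Hs. apply ancestor_nil in Hs. subst.
    exfalso; eapply nil_notin_edges; eauto.
Qed.

Lemma Inv_wait T h c : Inv T h -> Inv T ((c, None) :: h).
Proof. unfold Inv. rewrite visited_wait. auto. Qed.

Lemma dfs_inv_down T v D k : dfs_inv T v D -> In (k :: v) (edges T) -> D (k :: v) = false ->
  dfs_inv T (k :: v) (fun f => veq f (k :: v) || D f).
Proof.
  intros [I1 I2 I3 I4] Hw Hd. constructor.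
  - apply subtree_edge; auto.
  - intros f Hf Hs. apply ancestor_cons in Hs. destruct Hs as [->|Hs].
    + rewrite veq_refl; auto.
    + rewrite I2; auto. apply Bool.orb_true_r.
  - intros f g H1 H2 Hg H3. apply Bool.orb_true_iff in H1. destruct H1 as [H1|H1].
    + apply veq_true in H1; subst. exfalso; apply H2, ancestor_refl.
    + rewrite (I3 f g); auto; [apply Bool.orb_true_r|].
      intros Hs; apply H2. eapply ancestor_trans; eauto. apply ancestor_parent.
  - intros f g H1 Hf H3. apply Bool.orb_true_iff in H1. destruct H1 as [H1|H1].
    + apply veq_true in H1; subst. apply ancestor_cons in H3. destruct H3 as [->|H3].
      * rewrite veq_refl; auto.
      * rewrite I2; auto. apply Bool.orb_true_r.
    + rewrite (I4 f g); auto. apply Bool.orb_true_r.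
Qed.

Lemma Inv_down T h c k : Inv T h -> In (k :: Defs.pos h) (edges T) ->
  visited h (k :: Defs.pos h) = false -> Inv T ((c, Some (k :: Defs.pos h)) :: h).
Proof. intros H1 H2 H3. unfold Inv. rewrite visited_down. apply dfs_inv_down; auto. Qed.

(** Climbing back to the parent once every child edge is traversed preserves the
    invariant: the subtree just left is finished. *)
Lemma Inv_up T h c i u : Inv T h -> Defs.pos h = i :: u ->
  (forall k, In (k :: Defs.pos h) (edges T) -> visited h (k :: Defs.pos h) = true) ->
  Inv T ((c, Some u) :: h).
Proof.
  intros HI Hv Hch. unfold Inv in *. destruct HI as [I1 I2 I3 I4].
  assert (Hve : In (i :: u) (edges T)).
  { destruct I1 as [t Ht]. rewrite Hv in Ht. eapply vertex_edge; eauto. }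
  assert (HDv : visited h (i :: u) = true).
  { rewrite <- Hv. apply I2; [rewrite Hv; auto|apply ancestor_refl]. }
  rewrite (visited_up h c i u Hv HDv). simpl Defs.pos. rewrite Hv in *. constructor.
  - destruct I1 as [t Ht]. eapply subtree_ancestor; eauto. apply ancestor_parent.
  - intros f Hf Hs. apply I2; auto. eapply ancestor_trans; eauto. apply ancestor_parent.
  - intros f g H1 H2 Hg H3.
    destruct (list_eq_dec Nat.eq_dec f (i :: u)) as [->|Hne].
    + destruct H3 as [x ->]. destruct x as [|k x] using rev_ind; [simpl; auto|].
      rewrite <- app_assoc in *. simpl in *.
      apply (I3 (k :: i :: u)); auto.
      * apply Hch. apply (edge_ancestor T _ (x ++ k :: i :: u)); auto;
          [exists x; auto|discriminate].
      * apply not_ancestor_child.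
      * exists x; auto.
    + apply (I3 f g); auto. intros Hs. apply ancestor_cons in Hs. destruct Hs; auto.
  - intros f g H1 Hf H3. apply (I4 f g); auto.
Qed.

Definition dfs_move (T : btree) (h : history) (a : action) : Prop :=
  a = None \/
  (exists k, a = Some (k :: Defs.pos h) /\ In (k :: Defs.pos h) (edges T) /\
             visited h (k :: Defs.pos h) = false) \/
  (exists i u, Defs.pos h = i :: u /\ a = Some u /\
     forall k, In (k :: Defs.pos h) (edges T) -> visited h (k :: Defs.pos h) = true).

Lemma Inv_move T h c a : Inv T h -> dfs_move T h a -> Inv T ((c, a) :: h).
Proof.
  intros HI [->|[[k [-> [H1 H2]]]|[i [u [H1 [-> H2]]]]]].
  - apply Inv_wait; auto.
  - apply Inv_down; auto.
  - eapply Inv_up; eauto.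
Qed.

Lemma alpha_range p l r : 0 <= alpha p l r <= 1.
Proof.
  unfold alpha, proj01, Rmax, Rmin.
  destruct (Rle_dec 1 _); destruct (Rle_dec 0 _); lra.
Qed.

Lemma sigma_alpha_moves p T h c q a : Inv T h -> In (q, a) (sigma_alpha p T h c) ->
  0 <= q /\ dfs_move T h a.
Proof.
  intros [[t Ht] _ _ _] Hin. rewrite (sigma_alpha_dfs_step p T h c t Ht) in Hin.
  unfold dfs_move. set (v := Defs.pos h) in *.
  assert (Ch : forall k, In (k :: v) (edges T) <-> child t k <> None)
    by (intros; apply In_child; auto).
  assert (Up : (forall k, In (k :: v) (edges T) -> visited h (k :: v) = true) ->
     In (q, a) (act_up v c) -> 0 <= q /\ (a = None \/ exists i u, v = i :: u /\ a = Some u /\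
       forall k, In (k :: v) (edges T) -> visited h (k :: v) = true)).
  { intros Hall H. unfold act_up in H. destruct v as [|i u] eqn:Ev.
    - destruct H as [H|[]]. inversion H; subst. split; [lra|auto].
    - destruct (memb (i :: u) c); destruct H as [H|[]]; inversion H; subst;
        split; try lra; eauto 6. }
  assert (One : forall k, In (k :: v) (edges T) -> visited h (k :: v) = false ->
     In (q, a) (act_one (k :: v) c) -> 0 <= q /\ (a = None \/ a = Some (k :: v))).
  { intros k H1 H2 H. unfold act_one in H.
    destruct (memb (k :: v) c); destruct H as [H|[]]; inversion H; subst; split; auto; lra. }
  destruct t as [|s|l r]; simpl in Hin.
  - destruct Up as [? [?|?]]; auto.
    intros k Hk. apply Ch in Hk. destruct k; simpl in Hk; congruence.
  - destruct (visited h (0%nat :: v)) eqn:E0.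
    + destruct Up as [? [?|?]]; auto.
      intros k Hk. apply Ch in Hk. destruct k; simpl in Hk; [auto|congruence].
    + assert (I0 : In (0%nat :: v) (edges T)) by (apply Ch; simpl; congruence).
      destruct (One 0%nat) as [? [?|?]]; eauto 7.
  - assert (I0 : In (0%nat :: v) (edges T)) by (apply Ch; simpl; congruence).
    assert (I1 : In (1%nat :: v) (edges T)) by (apply Ch; simpl; congruence).
    destruct (visited h (0%nat :: v)) eqn:E0; destruct (visited h (1%nat :: v)) eqn:E1.
    + destruct Up as [? [?|?]]; auto.
      intros k Hk. apply Ch in Hk. destruct k as [|[|k]]; simpl in Hk; auto; congruence.
    + destruct (One 1%nat) as [? [?|?]]; eauto 7.
    + destruct (One 0%nat) as [? [?|?]]; eauto 7.
    + unfold act_two in Hin. pose proof (alpha_range p l r).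
      destruct (memb (0%nat :: v) c), (memb (1%nat :: v) c);
        repeat (destruct Hin as [Hin|Hin]; [inversion Hin; subst|]); try contradiction;
        (split; [lra|]); eauto 7.
Qed.

(** * The expected remaining time to hit an edge
    For a target edge [e], [hit_from D v] is the expected number of further
    stages until [sigma_alpha] traverses [e], when the searcher is at [v] and [D]
    is the set of traversed edges (satisfying the depth-first invariant). *)

Section Potential.
Variables (p : R) (T : btree) (e : vertex).

(** Probability that at least one of two edges is active. *)
Definition P2 : R := 1 - (1 - p) ^ 2.

(** Probability that the first (resp. second) edge of a fresh binary vertex is
    the first one taken. *)
Definition pi_left (l r : btree) : R := (p * (1 - p) + p ^ 2 * alpha p l r) / P2.
Definition pi_right (l r : btree) : R := (p * (1 - p) + p ^ 2 * (1 - alpha p l r)) / P2.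

(** Starting at the root of an unexplored subtree [t], expected time to traverse
    the edge reached by the forward path [ps]: wait for the first move, possibly
    explore the sibling subtree entirely, then continue downwards. *)
Fixpoint hit_fresh (t : btree) (ps : list nat) : R :=
  match t with
  | Leaf => 0
  | Unary s => match ps with 0%nat :: rest => 1 / p + hit_fresh s rest | _ => 0 end
  | Binary l r => match ps with
      | 0%nat :: rest => 1 / P2 + pi_right l r * tau_edge p r + hit_fresh l rest
      | 1%nat :: rest => 1 / P2 + pi_left l r * tau_edge p l + hit_fresh r rest
      | _ => 0 end
  end.

(** Expected time to finish the exploration of [T_x] from [x] and be back at
    [x], when the child edges in [D] are already fully explored. *)
Definition finish_time (D : vertex -> bool) (x : vertex) : R :=
  match subtree T x with
  | Some (Unary s) => if D (0%nat :: x) then 0 else tau_edge p s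
  | Some (Binary l r) =>
      if D (0%nat :: x) then (if D (1%nat :: x) then 0 else tau_edge p r)
      else (if D (1%nat :: x) then tau_edge p l else tau p (Binary l r))
  | _ => 0
  end.

(** For [a] on the path to [e], expected time to traverse [e] from [a]: reach
    the branch toward [e] (directly if the other branch is finished), then
    proceed in the unexplored branch. *)
Definition hit_below (D : vertex -> bool) (a : vertex) : R :=
  match subtree T a with
  | Some (Unary s) => match skipn (length a) (rev e) with
      | 0%nat :: rest => 1 / p + hit_fresh s rest
      | _ => 0 end
  | Some (Binary l r) => match skipn (length a) (rev e) with
      | 0%nat :: rest =>
          (if D (1%nat :: a) then 1 / p else 1 / P2 + pi_right l r * tau_edge p r)
          + hit_fresh l rest
      | 1%nat :: rest =>
          (if D (0%nat :: a) then 1 / p else 1 / P2 + pi_left l r * tau_edge p l)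
          + hit_fresh r rest
      | _ => 0 end
  | _ => 0
  end.

(** Off the path to [e], the searcher finishes the current subtree and climbs. *)
Fixpoint hit_from (D : vertex -> bool) (v : vertex) : R :=
  if ancestorb v (tl e) then hit_below D v
  else match v with
       | [] => 0
       | _ :: u => finish_time D v + 1 / p + hit_from D u
       end.

Definition hit_potential (h : history) : R := hit_from (visited h) (Defs.pos h).

Lemma hit_from_on_path D v : ancestorb v (tl e) = true -> hit_from D v = hit_below D v.
Proof. intros H. destruct v; simpl; rewrite H; auto. Qed.

Lemma hit_from_off_path D i u : ancestorb (i :: u) (tl e) = false ->
  hit_from D (i :: u) = finish_time D (i :: u) + 1 / p + hit_from D u.
Proof. intros H. simpl. rewrite H. auto. Qed.

Lemma hit_from_ext D1 D2 v :
  (forall k x, ancestor x v -> D1 (k :: x) = D2 (k :: x)) -> hit_from D1 v = hit_from D2 v.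
Proof.
  induction v as [|i u IH]; intros H; simpl;
    (assert (Hx : forall k, D1 (k :: _) = D2 (k :: _)) by (intros k; apply H, ancestor_refl)).
  - unfold hit_below, finish_time. rewrite !Hx. reflexivity.
  - unfold hit_below, finish_time. rewrite !Hx. rewrite IH; auto.
    intros k x Hx'. apply H. eapply ancestor_trans; eauto. apply ancestor_parent.
Qed.

Definition tau_at (x : vertex) : R :=
  match subtree T x with Some t => tau p t | None => 0 end.

Lemma finish_time_fresh D x : D (0%nat :: x) = false -> D (1%nat :: x) = false ->
  finish_time D x = tau_at x.
Proof.
  intros H0 H1. unfold finish_time, tau_at. rewrite H0, H1.
  destruct (subtree T x) as [[|s|l r]|]; simpl; auto.
Qed.

Lemma hit_fresh_nil t : hit_fresh t [] = 0.
Proof. destruct t; reflexivity. Qed.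

Lemma hit_below_fresh D a ta : subtree T a = Some ta ->
  D (0%nat :: a) = false -> D (1%nat :: a) = false ->
  hit_below D a = hit_fresh ta (skipn (length a) (rev e)).
Proof.
  intros Ht H0 H1. unfold hit_below. rewrite Ht, H0, H1.
  destruct ta as [|s|l r]; simpl; auto;
    destruct (skipn (length a) (rev e)) as [|[|[|j]] rest]; auto.
Qed.

Lemma hit_potential_nil : hit_potential [] = hit_fresh T (rev e).
Proof.
  unfold hit_potential. simpl Defs.pos.
  rewrite hit_from_on_path by (apply ancestorb_spec, ancestor_root).
  apply (hit_below_fresh _ [] T); auto. apply subtree_nil.
Qed.

End Potential.

Definition expect_moves (p : R) (T : btree) (act : config -> list (R * action))
  (F : action -> R) : R :=
  sumR (map (fun c => cfg_prob p T c * sumR (map (fun qa => fst qa * F (snd qa)) (act c)))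
            (configs T)).

(** Each elementary action depends on the activity of one or two edges only, so
    its mean is a Bernoulli average. *)
Section MoveMeans.
Variables (p : R) (T : btree).

Lemma expect_moves_ExE act F (G : (vertex -> bool) -> R) :
  (forall c, sumR (map (fun qa => fst qa * F (snd qa)) (act c)) = G (fun z => memb z c)) ->
  expect_moves p T act F = ExE p (edges T) G.
Proof.
  intros HG. unfold expect_moves, ExE, configs. apply sumR_map_ext. intros c _.
  rewrite HG. reflexivity.
Qed.

Lemma expect_act_one w F : In w (edges T) ->
  expect_moves p T (act_one w) F = p * F (Some w) + (1 - p) * F None.
Proof.
  intros Hw. set (G := fun b : bool => if b then 1 * F (Some w) + 0 else 1 * F None + 0).
  rewrite (expect_moves_ExE _ _ (fun m => G (m w))).
  - rewrite ExE_one by (auto; apply NoDup_edges). unfold G. lra.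
  - intros c. unfold act_one, G. destruct (memb w c); reflexivity.
Qed.

Lemma expect_act_up i u F : In (i :: u) (edges T) ->
  expect_moves p T (act_up (i :: u)) F = p * F (@Some vertex u) + (1 - p) * F None.
Proof.
  intros Hw. set (G := fun b : bool => if b then 1 * F (@Some vertex u) + 0 else 1 * F None + 0).
  rewrite (expect_moves_ExE _ _ (fun m => G (m (i :: u)))).
  - rewrite ExE_one by (auto; apply NoDup_edges). unfold G. lra.
  - intros c. unfold act_up, G. destruct (memb (i :: u) c); reflexivity.
Qed.

Lemma expect_act_two l r v F : In (0%nat :: v) (edges T) -> In (1%nat :: v) (edges T) ->
  expect_moves p T (act_two p l r v) F =
    p * p * (alpha p l r * F (@Some vertex (0%nat :: v))
             + (1 - alpha p l r) * F (@Some vertex (1%nat :: v)))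
    + p * (1 - p) * F (@Some vertex (0%nat :: v)) + (1 - p) * p * F (@Some vertex (1%nat :: v))
    + (1 - p) * (1 - p) * F None.
Proof.
  intros H0 H1.
  set (K := fun b0 b1 : bool => if b0
    then (if b1 then alpha p l r * F (@Some vertex (0%nat :: v))
                     + ((1 - alpha p l r) * F (@Some vertex (1%nat :: v)) + 0)
          else 1 * F (@Some vertex (0%nat :: v)) + 0)
    else (if b1 then 1 * F (@Some vertex (1%nat :: v)) + 0 else 1 * F None + 0)).
  rewrite (expect_moves_ExE _ _ (fun m => K (m (0%nat :: v)) (m (1%nat :: v)))).
  - rewrite ExE_two by (apply NoDup_edges || discriminate || auto). unfold K. lra.
  - intros c. unfold act_two, K.
    destruct (memb (0%nat :: v) c), (memb (1%nat :: v) c); reflexivity.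
Qed.

End MoveMeans.

Lemma P2_pos p : 0 < p <= 1 -> 0 < P2 p.
Proof. intros Hp. unfold P2. nra. Qed.

Section Bellman.
Variables (p : R) (T : btree) (e : vertex) (h : history).
Hypothesis Hp : 0 < p <= 1.
Hypothesis He : In e (edges T).
Hypothesis HI : Inv T h.
Hypothesis Hne : hits e h = false.

Definition next (a : action) : R := alive e (hit_potential p T e) (([] : config, a) :: h).

Lemma step_mean_dfs t : subtree T (Defs.pos h) = Some t ->
  step_mean p T (sigma_alpha p T) h (alive e (hit_potential p T e)) =
  expect_moves p T (dfs_step p t (Defs.pos h) (visited h)) next.
Proof.
  intros Ht. unfold step_mean, expect_moves. apply sumR_map_ext. intros c _.
  rewrite (sigma_alpha_dfs_step p T h c t Ht). reflexivity.
Qed.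

Lemma next_wait : next None = hit_potential p T e h.
Proof. unfold next, alive. cbn [hits traverses]. rewrite Hne. reflexivity. Qed.

Lemma next_down k : next (@Some vertex (k :: Defs.pos h)) =
  if veq e (k :: Defs.pos h) then 0
  else hit_from p T e (fun f => veq f (k :: Defs.pos h) || visited h f) (k :: Defs.pos h).
Proof.
  unfold next, alive. cbn [hits]. rewrite traverses_down, Hne, Bool.orb_false_r.
  destruct (veq e (k :: Defs.pos h)); auto. unfold hit_potential. rewrite visited_down. reflexivity.
Qed.

Lemma next_up i u : Defs.pos h = i :: u -> visited h (i :: u) = true ->
  next (@Some vertex u) = hit_from p T e (visited h) u.
Proof.
  intros Hv HD. unfold next, alive. cbn [hits]. rewrite Hv, traverses_up, Hne.
  replace (veq e (i :: u)) with false.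
  - unfold hit_potential. simpl. f_equal. exact (visited_up h [] i u Hv HD).
  - symmetry. apply veq_neq. intros ->. unfold visited in HD. congruence.
Qed.

Lemma e_not_root : e <> [].
Proof. intros ->. eapply nil_notin_edges; eauto. Qed.

Lemma visited_child_fresh w k : In w (edges T) -> visited h w = false ->
  visited h (k :: w) = false.
Proof. apply dfs_inv_fresh with (v := Defs.pos h). exact HI. Qed.

(** On the path to [e]: moving into the branch [j] toward [e] enters an
    unexplored subtree. *)
Lemma next_toward j rest tw :
  ancestor (j :: Defs.pos h) e -> skipn (length (j :: Defs.pos h)) (rev e) = rest ->
  (rest = [] <-> j :: Defs.pos h = e) -> subtree T (j :: Defs.pos h) = Some tw ->
  visited h (j :: Defs.pos h) = false ->
  next (@Some vertex (j :: Defs.pos h)) = hit_fresh p tw rest.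
Proof.
  intros Hwe Hsk Hrest Htw HDw. set (v := Defs.pos h) in *.
  assert (Hw : In (j :: v) (edges T)) by (eapply vertex_edge; eauto).
  rewrite next_down. fold v. destruct (veq e (j :: v)) eqn:Ew.
  - apply veq_true in Ew. symmetry in Ew. apply Hrest in Ew. rewrite Ew, hit_fresh_nil; auto.
  - apply veq_false in Ew. rewrite hit_from_on_path.
    + rewrite (hit_below_fresh p T e _ _ tw Htw), Hsk; auto;
        (rewrite veq_neq by apply child_neq_parent; apply visited_child_fresh; auto).
    + apply ancestorb_spec. destruct Hwe as [[|y x] Hx]; [simpl in Hx; congruence|].
      exists x. rewrite Hx. auto.
Qed.

(** On the path to [e]: the other branch [k] is explored entirely before coming
    back to the current vertex. *)
Lemma next_aside j k : ancestor (j :: Defs.pos h) e -> k <> j ->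
  In (k :: Defs.pos h) (edges T) -> visited h (k :: Defs.pos h) = false ->
  next (@Some vertex (k :: Defs.pos h)) = tau_at p T (k :: Defs.pos h) + 1 / p
    + hit_below p T e (fun f => veq f (k :: Defs.pos h) || visited h f) (Defs.pos h).
Proof.
  intros Hwe Hkj Hk HDk. set (v := Defs.pos h) in *.
  assert (Hk_e : ~ ancestor (k :: v) e).
  { intros Hs. apply Hkj. assert (k :: v = j :: v) by (eapply ancestor_same_depth; eauto).
    congruence. }
  rewrite next_down. fold v. rewrite veq_neq by (intros ->; apply Hk_e, ancestor_refl).
  rewrite hit_from_off_path.
  - rewrite finish_time_fresh;
      [|rewrite veq_neq by apply child_neq_parent; apply visited_child_fresh; auto ..].
    rewrite hit_from_on_path; [reflexivity|]. apply ancestorb_spec.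
    eapply ancestor_child_tl; eauto.
  - apply ancestorb_false. intros Hs. apply Hk_e. eapply ancestor_trans; eauto.
    pose proof e_not_root. destruct e; [congruence|]. apply ancestor_parent.
Qed.

Lemma path_edge_unvisited w : In w (edges T) -> ~ ancestor w (Defs.pos h) ->
  ancestor w e -> visited h w = false.
Proof.
  intros Hw Hnot Hwe. destruct (visited h w) eqn:E; auto. rewrite <- Hne.
  symmetry. apply (inv_finished _ _ _ HI w e); auto.
Qed.

Lemma bellman_on_path t : subtree T (Defs.pos h) = Some t ->
  ancestor (Defs.pos h) (tl e) ->
  hit_potential p T e h = 1 + expect_moves p T (dfs_step p t (Defs.pos h) (visited h)) next.
Proof.
  intros Ht Hpath. pose proof (P2_pos p Hp) as HP2.
  assert (HV : hit_potential p T e h = hit_below p T e (visited h) (Defs.pos h))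
    by (apply hit_from_on_path, ancestorb_spec; auto).
  assert (Nwait : next None = hit_below p T e (visited h) (Defs.pos h))
    by (rewrite next_wait; exact HV).
  rewrite HV.
  destruct (branch_toward _ e Hpath e_not_root) as [j [rest [Hsk [Hwe [Hsk2 Hrest]]]]].
  assert (Hw : In (j :: Defs.pos h) (edges T))
    by (apply (edge_ancestor T _ e); auto; discriminate).
  assert (HDw : visited h (j :: Defs.pos h) = false)
    by (apply path_edge_unvisited; auto; apply not_ancestor_child).
  destruct (subtree_edge T _ Hw) as [tw Htw].
  pose proof (next_toward j rest tw Hwe Hsk2 Hrest Htw HDw) as Ntoward.
  assert (Hch : child t j = Some tw) by (rewrite subtree_cons, Ht in Htw; auto).
  destruct t as [|s|l r]; simpl in Hch; [discriminate| |].
  - destruct j; [|discriminate]. inversion Hch; subst tw. simpl dfs_step. rewrite HDw.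
    rewrite expect_act_one, Ntoward, Nwait by auto.
    unfold hit_below. rewrite Ht, Hsk. field. lra.
  - assert (Hk : forall k, child (Binary l r) k <> None -> In (k :: Defs.pos h) (edges T))
      by (intros k; apply (In_child T (Defs.pos h) _ k Ht)).
    destruct j as [|[|j]]; [| |discriminate]; inversion Hch; subst tw; simpl dfs_step;
      rewrite HDw.
    + destruct (visited h (1%nat :: Defs.pos h)) eqn:E1.
      * rewrite expect_act_one, Ntoward, Nwait by auto.
        unfold hit_below. rewrite Ht, Hsk, E1. field. lra.
      * rewrite expect_act_two, Ntoward, Nwait, (next_aside 0 1 Hwe ltac:(discriminate)
          (Hk 1%nat ltac:(discriminate)) E1) by (apply Hk; discriminate).
        unfold hit_below, tau_at. rewrite subtree_cons, Ht, Hsk. cbv beta.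
        rewrite veq_refl, E1. simpl. unfold pi_right, P2, tau_edge in *. field. lra.
    + destruct (visited h (0%nat :: Defs.pos h)) eqn:E0.
      * rewrite expect_act_one, Ntoward, Nwait by auto.
        unfold hit_below. rewrite Ht, Hsk, E0. field. lra.
      * rewrite expect_act_two, Ntoward, Nwait, (next_aside 1 0 Hwe ltac:(discriminate)
          (Hk 0%nat ltac:(discriminate)) E0) by (apply Hk; discriminate).
        unfold hit_below, tau_at. rewrite subtree_cons, Ht, Hsk. cbv beta.
        rewrite veq_refl, E0. simpl. unfold pi_left, P2, tau_edge in *. field. lra.
Qed.

(** Off the path to [e]: descending into an unexplored child [k] explores its
    subtree, climbs back, and resumes the finishing of the current vertex. *)
Lemma next_off_down i u k : Defs.pos h = i :: u -> ancestorb (i :: u) (tl e) = false ->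
  In (k :: i :: u) (edges T) -> visited h (k :: i :: u) = false ->
  next (@Some vertex (k :: i :: u)) = tau_at p T (k :: i :: u) + 1 / p
    + (finish_time p T (fun f => veq f (k :: i :: u) || visited h f) (i :: u) + 1 / p
       + hit_from p T e (visited h) u).
Proof.
  intros Hv Hoff Hk HDk. pose proof (next_down k) as Ndown. rewrite Hv in Ndown.
  rewrite Ndown, veq_neq.
  2:{ intros ->. apply ancestorb_false in Hoff. apply Hoff, ancestor_refl. }
  rewrite hit_from_off_path.
  2:{ apply ancestorb_false. intros Hs. apply ancestorb_false in Hoff. apply Hoff.
      eapply ancestor_trans; eauto. apply ancestor_parent. }
  rewrite finish_time_fresh;
    [|rewrite veq_neq by apply child_neq_parent; apply visited_child_fresh; auto ..].
  rewrite hit_from_off_path by exact Hoff. do 2 f_equal. apply hit_from_ext.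
  intros k' x Hx. rewrite veq_neq; auto. intros H. inversion H; subst.
  apply (not_ancestor_child i u); auto.
Qed.

Lemma bellman_off_path t : subtree T (Defs.pos h) = Some t ->
  ~ ancestor (Defs.pos h) (tl e) ->
  hit_potential p T e h = 1 + expect_moves p T (dfs_step p t (Defs.pos h) (visited h)) next.
Proof.
  intros Ht Hoff. pose proof (P2_pos p Hp) as HP2. pose proof next_wait as Nwait.
  unfold hit_potential in *. apply ancestorb_false in Hoff.
  destruct (Defs.pos h) as [|i u] eqn:Hv; [rewrite (proj2 (ancestorb_spec _ _)) in Hoff;
    [discriminate|apply ancestor_root]|].
  rewrite hit_from_off_path in Nwait |- * by exact Hoff.
  assert (Hve : In (i :: u) (edges T)) by (eapply vertex_edge; eauto).
  assert (HDv : visited h (i :: u) = true).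
  { rewrite <- Hv. apply (inv_path _ _ _ HI); [rewrite Hv; auto|apply ancestor_refl]. }
  pose proof (next_up i u Hv HDv) as Nup.
  pose proof (fun k => next_off_down i u k Hv Hoff) as Ndown.
  assert (Hk : forall k, child t k <> None -> In (k :: i :: u) (edges T))
    by (intros k; apply (In_child T (i :: u) t k Ht)).
  unfold finish_time. rewrite Ht.
  destruct t as [|s|l r]; cbn [dfs_step].
  - rewrite expect_act_up, Nup, Nwait by auto. unfold finish_time. rewrite Ht. field. lra.
  - destruct (visited h (0%nat :: i :: u)) eqn:E0.
    + rewrite expect_act_up, Nup, Nwait by auto.
      unfold finish_time. rewrite Ht, E0. field. lra.
    + rewrite expect_act_one, Ndown, Nwait by (auto; apply Hk; discriminate).
      unfold finish_time, tau_at. rewrite subtree_cons, Ht. cbv beta.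
      rewrite veq_refl, E0. simpl. unfold tau_edge. field. lra.
  - assert (V01 : veq (1%nat :: i :: u) (0%nat :: i :: u) = false) by (apply veq_neq; congruence).
    assert (V10 : veq (0%nat :: i :: u) (1%nat :: i :: u) = false) by (apply veq_neq; congruence).
    destruct (visited h (0%nat :: i :: u)) eqn:E0, (visited h (1%nat :: i :: u)) eqn:E1.
    + rewrite expect_act_up, Nup, Nwait by auto.
      unfold finish_time. rewrite Ht, E0, E1. field. lra.
    + rewrite expect_act_one, Ndown, Nwait by (auto; apply Hk; discriminate).
      unfold finish_time, tau_at. rewrite subtree_cons, Ht. cbv beta.
      rewrite veq_refl, V10, E0, E1. simpl. unfold tau_edge. field. lra.
    + rewrite expect_act_one, Ndown, Nwait by (auto; apply Hk; discriminate).
      unfold finish_time, tau_at. rewrite subtree_cons, Ht. cbv beta.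
      rewrite veq_refl, V01, E0, E1. simpl. unfold tau_edge. field. lra.
    + rewrite expect_act_two, !Ndown, Nwait by (auto; apply Hk; discriminate).
      unfold finish_time, tau_at.
      rewrite (subtree_cons T 0 (i :: u)), (subtree_cons T 1 (i :: u)), Ht. cbv beta.
      rewrite !veq_refl, V01, V10, E0, E1. simpl. unfold tau_edge. field.
      split; [lra|]. unfold P2 in HP2. nra.
Qed.

Lemma bellman : hit_potential p T e h =
  1 + step_mean p T (sigma_alpha p T) h (alive e (hit_potential p T e)).
Proof.
  destruct (inv_vertex _ _ _ HI) as [t Ht]. rewrite (step_mean_dfs t Ht).
  destruct (ancestorb (Defs.pos h) (tl e)) eqn:Hpath.
  - apply bellman_on_path; auto. apply ancestorb_spec; auto.
  - apply bellman_off_path; auto. apply ancestorb_false; auto.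
Qed.

End Bellman.

(** * Boundedness of the remaining time
    Every ingredient of [hit_from] is dominated by a cycle time, so the remaining
    time is at most [(height T + 1) * (tau T + 1 / p)]. *)

Fixpoint height (t : btree) : nat :=
  match t with
  | Leaf => 0
  | Unary s => S (height s)
  | Binary l r => S (Nat.max (height l) (height r))
  end.

Section Bounds.
Variables (p : R) (T : btree).
Hypothesis Hp : 0 < p <= 1.

Lemma inv_p_pos : 0 < 1 / p.
Proof. apply Rdiv_lt_0_compat; lra. Qed.

Lemma inv_P2_pos : 0 < 1 / P2 p.
Proof. apply Rdiv_lt_0_compat; [lra|apply P2_pos; auto]. Qed.

Lemma tau_nonneg t : 0 <= tau p t.
Proof.
  pose proof inv_p_pos. pose proof inv_P2_pos. unfold P2 in *.
  induction t; cbn [tau]; try lra; unfold Rdiv in *; lra.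
Qed.

Lemma tau_edge_pos t : 1 / p < tau_edge p t.
Proof. pose proof inv_p_pos. pose proof (tau_nonneg t). unfold tau_edge, Rdiv in *. lra. Qed.

Lemma tau_edge_child t k s : child t k = Some s -> tau_edge p s <= tau p t.
Proof.
  pose proof inv_p_pos. pose proof inv_P2_pos. unfold P2 in *.
  destruct t as [|s0|l r]; cbn [child tau]; intros Hc; [discriminate| |].
  - destruct k; inversion Hc; subst. unfold tau_edge. lra.
  - pose proof (tau_edge_pos l). pose proof (tau_edge_pos r). unfold tau_edge in *.
    destruct k as [|[|k]]; inversion Hc; subst; unfold Rdiv in *; lra.
Qed.

Lemma tau_subtree ps t s : subtree_fwd t ps = Some s -> tau p s <= tau p t.
Proof.
  revert t; induction ps as [|k ps IH]; intros t H.
  - rewrite subtree_fwd_nil in H. inversion H; subst; lra.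
  - rewrite subtree_fwd_cons in H. destruct (child t k) as [c|] eqn:Ec; [|discriminate].
    apply IH in H. apply tau_edge_child in Ec. unfold tau_edge in Ec.
    assert (0 < 2 / p) by (apply Rdiv_lt_0_compat; lra). lra.
Qed.

Lemma height_subtree t ps s : subtree_fwd t ps = Some s -> (length ps <= height t)%nat.
Proof.
  revert t; induction ps as [|k ps IH]; intros t H; simpl; [lia|].
  rewrite subtree_fwd_cons in H. destruct (child t k) as [c|] eqn:Ec; [|discriminate].
  apply IH in H. destruct t as [|s0|l r]; simpl in Ec; [discriminate| |].
  - destruct k; inversion Ec; subst. simpl. lia.
  - destruct k as [|[|k]]; inversion Ec; subst; simpl; lia.
Qed.

Lemma pi_left_range l r : 0 <= pi_left p l r <= 1.
Proof.
  unfold pi_left. pose proof (P2_pos p Hp). pose proof (alpha_range p l r).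
  split; [apply Rmult_le_pos; [nra|left; apply Rinv_0_lt_compat; lra]|].
  apply Rmult_le_reg_r with (P2 p); auto. unfold Rdiv. rewrite Rmult_assoc, Rinv_l by lra.
  unfold P2. nra.
Qed.

Lemma pi_right_range l r : 0 <= pi_right p l r <= 1.
Proof.
  unfold pi_right. pose proof (P2_pos p Hp). pose proof (alpha_range p l r).
  split; [apply Rmult_le_pos; [nra|left; apply Rinv_0_lt_compat; lra]|].
  apply Rmult_le_reg_r with (P2 p); auto. unfold Rdiv. rewrite Rmult_assoc, Rinv_l by lra.
  unfold P2. nra.
Qed.

Lemma sibling_cost_bounds pi t : 0 <= pi <= 1 ->
  0 <= 1 / P2 p + pi * tau_edge p t <= 1 / P2 p + tau_edge p t.
Proof. intros Hpi. pose proof inv_P2_pos. pose proof (tau_edge_pos t). pose proof inv_p_pos. nra. Qed.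

Lemma hit_fresh_bounds t ps : 0 <= hit_fresh p t ps <= tau p t.
Proof.
  pose proof inv_p_pos. pose proof inv_P2_pos.
  revert ps; induction t as [|s IH|l IHl r IHr]; intros ps; cbn [hit_fresh tau]; [lra| |].
  - pose proof (tau_nonneg s).
    destruct ps as [|[|k] rest]; try lra. specialize (IH rest). lra.
  - pose proof (tau_edge_pos l). pose proof (tau_edge_pos r). unfold tau_edge in *.
    fold (P2 p). pose proof (tau_nonneg l). pose proof (tau_nonneg r).
    destruct ps as [|[|[|k]] rest]; try lra.
    + specialize (IHl rest). pose proof (sibling_cost_bounds _ r (pi_right_range l r)).
      unfold tau_edge in *. lra.
    + specialize (IHr rest). pose proof (sibling_cost_bounds _ l (pi_left_range l r)).
      unfold tau_edge in *. lra.
Qed.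

Lemma finish_time_bounds D x : 0 <= finish_time p T D x <= tau p T.
Proof.
  pose proof (tau_nonneg T). unfold finish_time.
  destruct (subtree T x) as [t|] eqn:Ht; [|lra].
  apply tau_subtree in Ht. destruct t as [|s|l r]; [lra| |].
  - pose proof (tau_edge_child (Unary s) 0 s eq_refl). pose proof (tau_edge_pos s).
    pose proof inv_p_pos. destruct (D (0%nat :: x)); lra.
  - pose proof (tau_edge_child (Binary l r) 0 l eq_refl).
    pose proof (tau_edge_child (Binary l r) 1 r eq_refl).
    pose proof (tau_edge_pos l). pose proof (tau_edge_pos r). pose proof inv_p_pos.
    destruct (D (0%nat :: x)), (D (1%nat :: x)); lra.
Qed.

Lemma hit_below_bounds e D a : 0 <= hit_below p T e D a <= tau p T.
Proof.
  pose proof inv_p_pos. pose proof (tau_nonneg T). unfold hit_below.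
  destruct (subtree T a) as [t|] eqn:Ht; [|lra].
  apply tau_subtree in Ht. destruct t as [|s|l r]; [lra| |]; cbn [tau] in Ht.
  - destruct (skipn (length a) (rev e)) as [|[|k] rest]; try lra.
    pose proof (hit_fresh_bounds s rest). unfold tau_edge in *. lra.
  - pose proof (tau_edge_pos l). pose proof (tau_edge_pos r). fold (P2 p) in Ht.
    destruct (skipn (length a) (rev e)) as [|[|[|k]] rest]; try lra.
    + pose proof (hit_fresh_bounds l rest). pose proof (sibling_cost_bounds _ r (pi_right_range l r)).
      unfold tau_edge in *. destruct (D (1%nat :: a)); lra.
    + pose proof (hit_fresh_bounds r rest). pose proof (sibling_cost_bounds _ l (pi_left_range l r)).
      unfold tau_edge in *. destruct (D (0%nat :: a)); lra.
Qed.

Lemma hit_from_bounds e D v :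
  0 <= hit_from p T e D v <= INR (length v) * (tau p T + 1 / p) + tau p T.
Proof.
  pose proof inv_p_pos. pose proof (tau_nonneg T).
  induction v as [|i u IH]; simpl hit_from.
  - destruct (ancestorb [] (tl e)); pose proof (hit_below_bounds e D []); simpl; lra.
  - rewrite length_cons, S_INR. pose proof (pos_INR (length u)).
    destruct (ancestorb (i :: u) (tl e)).
    + pose proof (hit_below_bounds e D (i :: u)). nra.
    + pose proof (finish_time_bounds D (i :: u)). lra.
Qed.

Lemma hit_potential_bounds e h : Inv T h ->
  0 <= hit_potential p T e h <= (INR (height T) + 1) * (tau p T + 1 / p).
Proof.
  intros [[t Ht] _ _ _]. unfold hit_potential.
  pose proof (hit_from_bounds e (visited h) (Defs.pos h)).
  unfold subtree in Ht. apply height_subtree in Ht. rewrite length_rev in Ht.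
  apply le_INR in Ht. pose proof inv_p_pos. pose proof (tau_nonneg T). nra.
Qed.

End Bounds.

(** * The value of the remaining time from the root
    When [alpha] is never clipped to [0] or [1], the bias exactly balances the
    two branches of each binary vertex: the time to reach any leaf edge is
    [tau/2 + Lambda], and no edge takes longer. *)

Section Balance.
Variable p : R.
Hypothesis Hp : 0 < p <= 1.

Definition alpha_raw (l r : btree) : R :=
  / 2 + (Lambda p l - Lambda p r) / (tau_edge p l + tau_edge p r) * ((1 - (1 - p) ^ 2) / p ^ 2).

Fixpoint unclipped (t : btree) : Prop :=
  match t with
  | Leaf => True
  | Unary s => unclipped s
  | Binary l r => unclipped l /\ unclipped r /\ 0 <= alpha_raw l r <= 1
  end.

Lemma alpha_unclipped l r : 0 <= alpha_raw l r <= 1 -> alpha p l r = alpha_raw l r.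
Proof.
  intros H. unfold alpha, proj01. fold (alpha_raw l r). unfold Rmax, Rmin.
  destruct (Rle_dec 1 (alpha_raw l r)); destruct (Rle_dec 0 _); lra.
Qed.

Lemma tau_edge_sum_pos l r : 0 < tau_edge p l + tau_edge p r.
Proof. pose proof (tau_edge_pos p Hp l). pose proof (tau_edge_pos p Hp r). pose proof (inv_p_pos p Hp). lra. Qed.

(** Balance at a binary vertex: entering the left (resp. right) branch after the
    biased first move costs exactly the difference between the values of the
    whole tree and of the branch. *)
Lemma balance_left l r : 0 <= alpha_raw l r <= 1 ->
  1 / P2 p + pi_right p l r * tau_edge p r + (/ 2 * tau p l + Lambda p l) =
  / 2 * tau p (Binary l r) + Lambda p (Binary l r).
Proof.
  intros H. pose proof (tau_edge_sum_pos l r). pose proof (P2_pos p Hp).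
  unfold pi_right. rewrite alpha_unclipped by auto. unfold alpha_raw, P2 in *.
  cbn [tau Lambda]. unfold tau_edge in *. pose proof (tau_nonneg p Hp l).
  pose proof (tau_nonneg p Hp r). field. repeat split; try lra; nra.
Qed.

Lemma balance_right l r : 0 <= alpha_raw l r <= 1 ->
  1 / P2 p + pi_left p l r * tau_edge p l + (/ 2 * tau p r + Lambda p r) =
  / 2 * tau p (Binary l r) + Lambda p (Binary l r).
Proof.
  intros H. pose proof (tau_edge_sum_pos l r). pose proof (P2_pos p Hp).
  unfold pi_left. rewrite alpha_unclipped by auto. unfold alpha_raw, P2 in *.
  cbn [tau Lambda]. unfold tau_edge in *. pose proof (tau_nonneg p Hp l).
  pose proof (tau_nonneg p Hp r). field. repeat split; try lra; nra.
Qed.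

Lemma half_tau_unary s : / 2 * tau p (Unary s) + Lambda p (Unary s) =
  1 / p + (/ 2 * tau p s + Lambda p s).
Proof. cbn [tau Lambda]. field. lra. Qed.

Lemma hit_fresh_leaf t ps : unclipped t -> subtree_fwd t ps = Some Leaf ->
  hit_fresh p t ps = / 2 * tau p t + Lambda p t.
Proof.
  revert ps; induction t as [|s IH|l IHl r IHr]; intros ps HU Hs.
  - destruct ps; [simpl; lra|discriminate].
  - destruct ps as [|[|k] rest]; [discriminate| |discriminate].
    cbn [hit_fresh]. rewrite half_tau_unary, IH; auto.
  - destruct HU as [HUl [HUr Hx]].
    destruct ps as [|[|[|k]] rest]; [discriminate| | |discriminate]; simpl in Hs; cbn [hit_fresh].
    + rewrite IHl by auto. apply balance_left; auto.
    + rewrite IHr by auto. apply balance_right; auto.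
Qed.

Lemma half_tau_Lambda_nonneg t : unclipped t -> 0 <= / 2 * tau p t + Lambda p t.
Proof.
  induction t as [|s IH|l IHl r IHr]; intros HU.
  - simpl; lra.
  - rewrite half_tau_unary. pose proof (inv_p_pos p Hp). specialize (IH HU). lra.
  - destruct HU as [HUl [HUr Hx]]. rewrite <- (balance_left l r Hx).
    pose proof (sibling_cost_bounds p Hp _ r (pi_right_range p Hp l r)). specialize (IHl HUl). lra.
Qed.

Lemma hit_fresh_le t ps : unclipped t -> hit_fresh p t ps <= / 2 * tau p t + Lambda p t.
Proof.
  revert ps; induction t as [|s IH|l IHl r IHr]; intros ps HU;
    pose proof (half_tau_Lambda_nonneg _ HU).
  - simpl; lra.
  - destruct ps as [|[|k] rest]; cbn [hit_fresh]; try lra.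
    specialize (IH rest HU). rewrite half_tau_unary. lra.
  - destruct HU as [HUl [HUr Hx]].
    destruct ps as [|[|[|k]] rest]; cbn [hit_fresh]; try lra.
    + rewrite <- (balance_left l r Hx). specialize (IHl rest HUl). lra.
    + rewrite <- (balance_right l r Hx). specialize (IHr rest HUr). lra.
Qed.

End Balance.

(** * No clipping close to [p = 1]
    [Lambda] is a weighted sum of non-positive terms of size [O(1 - p)], one per
    binary vertex, so for [p] close enough to [1] the correction to [1/2] in
    [alpha] is small and [alpha] is never clipped. *)

Fixpoint nb_binary (t : btree) : nat :=
  match t with
  | Leaf => 0
  | Unary s => nb_binary s
  | Binary l r => S (nb_binary l + nb_binary r)
  end.

Definition threshold (N : nat) : R := 1 - 1 / (2 * (INR N + 1)).

Lemma threshold_range N : 1 / 2 <= threshold N < 1.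
Proof.
  unfold threshold. pose proof (pos_INR N).
  assert (0 < 1 / (2 * (INR N + 1))) by (apply Rdiv_lt_0_compat; lra).
  assert (1 / (2 * (INR N + 1)) <= 1 / 2).
  { apply Rmult_le_reg_r with (2 * (INR N + 1)); [lra|]. field_simplify; lra. }
  lra.
Qed.

Lemma threshold_gap N p : threshold N <= p -> INR N * (1 - p) <= 1 / 2.
Proof.
  unfold threshold. intros Hp0. pose proof (pos_INR N).
  assert (INR N * (1 - p) <= INR N * (1 / (2 * (INR N + 1))))
    by (apply Rmult_le_compat_l; lra).
  assert (INR N * (1 / (2 * (INR N + 1))) <= 1 / 2).
  { apply Rmult_le_reg_r with (2 * (INR N + 1)); [lra|]. field_simplify; lra. }
  lra.
Qed.

Section Unclipped.
Variable p : R.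
Hypothesis Hp : 0 < p <= 1.

(** Size of the additive term of [Lambda] at a binary vertex. *)
Definition lambda_step : R := (1 - p) / P2 p.

Lemma lambda_step_nonneg : 0 <= lambda_step.
Proof.
  unfold lambda_step. pose proof (P2_pos p Hp).
  apply Rmult_le_pos; [lra|left; apply Rinv_0_lt_compat; lra].
Qed.

Lemma Lambda_bounds t : - INR (nb_binary t) * lambda_step <= Lambda p t <= 0.
Proof.
  pose proof (P2_pos p Hp) as H2. pose proof lambda_step_nonneg as Hc.
  induction t as [|s IH|l IHl r IHr]; cbn [Lambda nb_binary]; [simpl; lra|auto|].
  pose proof (tau_edge_sum_pos p Hp l r).
  set (a := tau_edge p l) in *. set (b := tau_edge p r) in *.
  assert (Ha : 0 <= a) by (pose proof (tau_edge_pos p Hp l); pose proof (inv_p_pos p Hp); unfold a; lra).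
  assert (Hb : 0 <= b) by (pose proof (tau_edge_pos p Hp r); pose proof (inv_p_pos p Hp); unfold b; lra).
  set (wa := a / (a + b)). set (wb := b / (a + b)).
  assert (Hw : wa + wb = 1) by (unfold wa, wb; field; lra).
  assert (Hwa : 0 <= wa) by (unfold wa; apply Rmult_le_pos; [lra|left; apply Rinv_0_lt_compat; lra]).
  assert (Hwb : 0 <= wb) by (unfold wb; apply Rmult_le_pos; [lra|left; apply Rinv_0_lt_compat; lra]).
  assert (Ex : / 2 * (1 / (1 - (1 - p) ^ 2) - 1 / p) = - / 2 * lambda_step)
    by (unfold lambda_step, P2 in *; field; lra).
  rewrite Ex, S_INR, plus_INR.
  pose proof (pos_INR (nb_binary l)). pose proof (pos_INR (nb_binary r)).
  assert (- INR (nb_binary l) * lambda_step <= wa * Lambda p l <= 0) by nra.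
  assert (- INR (nb_binary r) * lambda_step <= wb * Lambda p r <= 0) by nra.
  nra.
Qed.

Lemma alpha_raw_range l r :
  - (2 * p) <= (Lambda p l - Lambda p r) * P2 p <= 2 * p -> 0 <= alpha_raw p l r <= 1.
Proof.
  intros HY. pose proof (P2_pos p Hp).
  set (Y := (Lambda p l - Lambda p r) * P2 p) in *.
  set (Z := p ^ 2 * (tau_edge p l + tau_edge p r)).
  assert (HZ : 4 * p <= Z).
  { unfold Z, tau_edge. pose proof (tau_nonneg p Hp l). pose proof (tau_nonneg p Hp r).
    replace (p ^ 2 * (tau p l + 2 / p + (tau p r + 2 / p)))
      with (p ^ 2 * (tau p l + tau p r) + 4 * p) by (field; lra). nra. }
  assert (Ex : alpha_raw p l r = / 2 + Y / Z).
  { unfold alpha_raw, Y, Z, P2. pose proof (tau_edge_sum_pos p Hp l r). field. nra. }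
  rewrite Ex. assert (Hbound : - / 2 <= Y / Z <= / 2).
  { split; apply Rmult_le_reg_r with Z; try lra; unfold Rdiv;
      rewrite Rmult_assoc, Rinv_l by lra; lra. }
  lra.
Qed.

Lemma unclipped_near_one N t : (nb_binary t <= N)%nat -> threshold N <= p -> unclipped p t.
Proof.
  intros HN Hp0. pose proof (threshold_range N). pose proof (threshold_gap N p Hp0).
  pose proof lambda_step_nonneg. pose proof (P2_pos p Hp).
  assert (HcP : lambda_step * P2 p = 1 - p) by (unfold lambda_step; field; lra).
  induction t as [|s IH|l IHl r IHr]; cbn [unclipped nb_binary] in *; auto.
  split; [apply IHl; lia|split; [apply IHr; lia|]].
  apply alpha_raw_range.
  pose proof (Lambda_bounds l). pose proof (Lambda_bounds r).
  assert (INR (nb_binary l) <= INR N) by (apply le_INR; lia).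
  assert (INR (nb_binary r) <= INR N) by (apply le_INR; lia).
  assert (Hgap : - (INR N * lambda_step) <= Lambda p l - Lambda p r <= INR N * lambda_step)
    by nra.
  assert (- (INR N * (1 - p)) <= (Lambda p l - Lambda p r) * P2 p <= INR N * (1 - p))
    by (rewrite <- HcP; nra).
  lra.
Qed.

End Unclipped.

Theorem sigma_alpha_expected_time p T e s : 0 < p <= 1 -> In e (edges T) ->
  (forall h c, Inv T h -> s h c = sigma_alpha p T h c) ->
  expected_time_is p T s e (hit_fresh p T (rev e)).
Proof.
  intros Hp He Hs. rewrite <- (hit_potential_nil p T e).
  apply (expected_time_from_potential p T s e (hit_potential p T e) (Inv T)
           ((INR (height T) + 1) * (tau p T + 1 / p))).
  - lra.
  - apply Inv_nil.
  - intros h c q a HI H. rewrite Hs in H by auto.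
    apply Inv_move; auto. eapply sigma_alpha_moves; eauto.
  - intros h c q a HI H. rewrite Hs in H by auto. eapply sigma_alpha_moves; eauto.
  - intros h HI. apply hit_potential_bounds; auto.
  - intros h HI Hne. rewrite (bellman p T e h Hp He HI Hne). f_equal.
    unfold step_mean. apply sumR_map_ext. intros c _. rewrite Hs; auto.
Qed.

(** * A valid version of [sigma_alpha]
    At histories that cannot occur (position outside [T]) [sigma_alpha] might
    prescribe an illegal move; waiting there instead gives a valid strategy that
    agrees with [sigma_alpha] on every reachable history. *)

Lemma sigma_alpha_legal p T h c q a : In (q, a) (sigma_alpha p T h c) ->
  0 <= q /\
  (a = None \/
   (exists k, a = Some (k :: Defs.pos h) /\ In (k :: Defs.pos h) (edges T) /\
              In (k :: Defs.pos h) c) \/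
   (exists i u, Defs.pos h = i :: u /\ a = Some u /\ In (i :: u) c)).
Proof.
  unfold sigma_alpha. cbv zeta.
  remember (filter (fun w => memb w (edges T)) [0%nat :: Defs.pos h; 1%nat :: Defs.pos h])
    as out eqn:Eo.
  remember (filter (fun w => negb (traversed T h w)) out) as untr eqn:Eu.
  remember (filter (fun w => memb w c) untr) as act eqn:Ea.
  assert (HA : forall w, In w act -> exists k, w = k :: Defs.pos h /\ In w (edges T) /\ In w c).
  { intros w Hw. subst act untr out. apply filter_In in Hw. destruct Hw as [Hw Hc].
    apply filter_In in Hw. destruct Hw as [Hw _]. apply filter_In in Hw. destruct Hw as [Hw He].
    apply memb_In in Hc. apply memb_In in He. destruct Hw as [<-|[<-|[]]]; eauto. }
  clear Ea. intros H.
  destruct act as [|w1 [|w2 [|w3 rest]]].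
  - destruct untr.
    + destruct (Defs.pos h) as [|i u] eqn:Ev.
      * destruct H as [H|[]]. inversion H; subst. split; [lra|auto].
      * destruct (memb (i :: u) c) eqn:Em; destruct H as [H|[]]; inversion H; subst;
          split; try lra; auto.
        right; right. exists i, u. apply memb_In in Em. auto.
    + destruct H as [H|[]]. inversion H; subst. split; [lra|auto].
  - destruct H as [H|[]]. inversion H; subst. split; [lra|]. right; left.
    destruct (HA w1 (or_introl eq_refl)) as [k [-> Hk]]. eauto.
  - assert (Hal : 0 <= match subtree T (Defs.pos h) with
                       | Some (Binary l r) => alpha p l r | _ => / 2 end <= 1).
    { destruct (subtree T (Defs.pos h)) as [[| |l r]|]; try lra. apply alpha_range. }
    destruct H as [H|[H|[]]]; inversion H; subst; (split; [lra|]); right; left.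
    + destruct (HA w1 (or_introl eq_refl)) as [k [-> Hk]]. eauto.
    + destruct (HA w2 (or_intror (or_introl eq_refl))) as [k [-> Hk]]. eauto.
  - destruct H as [H|[]]. inversion H; subst. split; [lra|auto].
Qed.

Lemma sigma_alpha_total p T h c : sumR (map fst (sigma_alpha p T h c)) = 1.
Proof.
  unfold sigma_alpha. cbv zeta.
  destruct (filter (fun w => memb w c) _) as [|w1 [|w2 [|w3 rest]]]; simpl; try lra.
  destruct (filter _ _); simpl; try lra. destruct (Defs.pos h); simpl; try lra.
  destruct (memb _ c); simpl; lra.
Qed.

Definition is_vertex (T : btree) (v : vertex) : bool :=
  match v with [] => true | _ => memb v (edges T) end.

Definition sigma_safe (p : R) (T : btree) : strategy :=
  fun h c => if is_vertex T (Defs.pos h) then sigma_alpha p T h c else [(1, None)].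

Lemma sigma_safe_valid p T : valid_strategy T (sigma_safe p T).
Proof.
  intros h c. unfold sigma_safe. destruct (is_vertex T (Defs.pos h)) eqn:Ok.
  - split; [|apply sigma_alpha_total]. intros q a H.
    destruct (sigma_alpha_legal p T h c q a H)
      as [Hq [->|[[k [-> [H1 H2]]]|[i [u [Hv [-> H2]]]]]]].
    + split; simpl; auto.
    + split; auto. simpl. left. exists k. auto.
    + split; auto. simpl. right. exists i. rewrite Hv. repeat split; auto.
      unfold is_vertex in Ok. rewrite Hv in Ok. apply memb_In; auto.
  - split; [|simpl; lra]. intros q a [H|[]]. inversion H; subst. split; [lra|simpl; auto].
Qed.

Lemma sigma_safe_agree p T h c : Inv T h -> sigma_safe p T h c = sigma_alpha p T h c.
Proof.
  intros [[t Ht] _ _ _]. unfold sigma_safe, is_vertex.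
  destruct (Defs.pos h) as [|i u] eqn:Ev; auto.
  replace (memb (i :: u) (edges T)) with true; auto. symmetry. apply memb_In.
  eapply vertex_edge; eauto.
Qed.

Theorem mainTheorem8 (T : btree) :
  exists p0 : R, 0 < p0 < 1 /\
    forall p : R, p0 <= p <= 1 ->
      (forall e : vertex, is_leaf_edge T e ->
         expected_time_is p T (sigma_alpha p T) e (/ 2 * tau p T + Lambda p T))
      /\ upper_value_le p T (/ 2 * tau p T + Lambda p T).
Proof.
  exists (threshold (nb_binary T)). pose proof (threshold_range (nb_binary T)) as Hr.
  split; [lra|]. intros p [Hp0 Hp1]. assert (Hp : 0 < p <= 1) by lra.
  assert (HU : unclipped p T) by (apply (unclipped_near_one p Hp (nb_binary T)); auto).
  split.
  - intros e [He Hleaf].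
    assert (Hs : subtree T e = Some Leaf).
    { destruct (subtree_edge T e He) as [[|s|l r] Hs]; auto; exfalso;
        apply (Hleaf 0%nat); apply (In_child T e _ 0 Hs); simpl; congruence. }
    rewrite <- (hit_fresh_leaf p Hp T (rev e)) by auto.
    apply sigma_alpha_expected_time; auto.
  - intros eps Heps. exists (sigma_safe p T). split; [apply sigma_safe_valid|].
    intros e He. exists (hit_fresh p T (rev e)). split.
    + apply sigma_alpha_expected_time; auto. intros h c HI. apply sigma_safe_agree; auto.
    + pose proof (hit_fresh_le p Hp T (rev e) HU). lra.
Qed.
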